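(* For all session types $S,T\in\mathcal{ST}$: $S=_{\mathsf{sbt}}T$ if and only if $\mathcal M(S)\sqsubseteq\mathcal M(T)$ and $\mathcal M(T)\sqsubseteq\mathcal M(S)$.
   Context: Session types. Fix a set $BT$ of base types with a preorder $\leq_{\mathsf b}$ and a countable set $\mathcal L$ of labels. Session type terms: $T::=\mathsf{end}\mid ?[M]T\mid ![M]T\mid \&\langle l_1{:}T_1,\dots,l_n{:}T_n\rangle\mid \oplus\langle l_1{:}T_1,\dots,l_n{:}T_n\rangle\mid \mu X.T\mid X$ ($n\ge1$, labels distinct), $M::=T\mid\mathtt t$, $\mathtt t\in BT$. Guarded: in every subterm $\mu X.T'$ every occurrence of $X$ in $T'$ lies under a constructor other than $\mu$; $\mathcal{ST}$ = closed guarded terms. $\mathrm{unfold}(\mu X.T')=\mathrm{unfold}(T'[\mu X.T'/X])$, otherwise $\mathrm{unfold}(T)=T$. Subtyping $\leq$ is the greatest $R\subseteq\mathcal{ST}^2$ such that for $(T,S)\in R$: if $\mathrm{unfold}(T)=\mathsf{end}$ then $\mathrm{unfold}(S)=\mathsf{end}$; if $\mathrm{unfold}(T)=?[\mathtt t_1]S_1$ then $\mathrm{unfold}(S)=?[\mathtt t_2]S_2$, $S_1RS_2$, $\mathtt t_1\leq_{\mathsf b}\mathtt t_2$; if $\mathrm{unfold}(T)=![\mathtt t_1]S_1$ then $\mathrm{unfold}(S)=![\mathtt t_2]S_2$, $S_1RS_2$, $\mathtt t_2\leq_{\mathsf b}\mathtt t_1$; if $\mathrm{unfold}(T)=![T_1]S_1$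 then $\mathrm{unfold}(S)=![T_2]S_2$, $S_1RS_2$, $T_2RT_1$; if $\mathrm{unfold}(T)=?[T_1]S_1$ then $\mathrm{unfold}(S)=?[T_2]S_2$, $S_1RS_2$, $T_1RT_2$; branch $\&\langle l_1{:}T_1..l_m{:}T_m\rangle$ requires $\mathrm{unfold}(S)=\&\langle l_1{:}S_1..l_n{:}S_n\rangle$, $m\le n$, $T_iRS_i$ ($i\le m$); choice $\oplus\langle l_1{:}T_1..l_m{:}T_m\rangle$ requires $\mathrm{unfold}(S)=\oplus\langle l_1{:}S_1..l_n{:}S_n\rangle$, $n\le m$, $T_iRS_i$ ($i\le n$). Type equivalence: $T=_{\mathsf{sbt}}S$ iff $T\leq S$ and $S\leq T$. Contracts: terms $\sigma::=\mathbf 1\mid ?\mathtt t.\sigma\mid !\mathtt t.\sigma\mid !(\sigma).\sigma\mid ?(\sigma).\sigma\mid \sum_{i\in I}?l_i.\sigma_i\mid \bigoplus_{i\in I}!l_i.\sigma_i\mid \mu x.\sigma\mid x$; $\mathcal{SC}$ = closed guarded terms. LTS: $\mathbf 1\xrightarrow{\checkmark}$; $\lambda.\sigma\xrightarrow\lambda\sigma$ for prefixes ($!l.\sigma$ a one-branch internal sum is a prefix); $\bigoplus_{i\in I}!l_i.\sigma_i\xrightarrow\tau !l_i.\sigma_i$ when $|I|>1$; $\sum ?l_i.\sigma_i\xrightarrow{?l_i}\sigma_i$; $\mu x.\sigma\xrightarrow\tau\sigma[\mu x.\sigma/x]$. For $B\subseteq\mathcal{SC}^2$: $\lambda_1\bowtie_B\lambda_2$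 iff the pair is $(!l,?l)$, $(?l,!l)$, $(!\mathtt t_1,?\mathtt t_2)$ with $\mathtt t_1\leq_{\mathsf b}\mathtt t_2$, $(?\mathtt t_1,!\mathtt t_2)$ with $\mathtt t_2\leq_{\mathsf b}\mathtt t_1$, $(!(\sigma_1),?(\sigma_2))$ with $\sigma_1B\sigma_2$, or $(?(\sigma_1),!(\sigma_2))$ with $\sigma_2B\sigma_1$. $\rho\|\sigma\xrightarrow\tau_B$ by a $\tau$ of either side, or by synchronisation $\rho\xrightarrow{\lambda_1}\rho'$, $\sigma\xrightarrow{\lambda_2}\sigma'$, $\lambda_1\bowtie_B\lambda_2$, giving $\rho'\|\sigma'$. $\dashv_B$ is the greatest $R$ such that $\rho R\sigma$ implies: if $\rho\|\sigma$ has no $\xrightarrow\tau_B$ move then $\rho\xrightarrow\checkmark$ and $\sigma\xrightarrow\checkmark$; each $\rho\|\sigma\xrightarrow\tau_B\rho'\|\sigma'$ has $\rho'R\sigma'$. $\sigma_1\sqsubseteq_B\sigma_2$ iff $\forall\rho\in\mathcal{SC}$, $\rho\dashv_B\sigma_1\Rightarrow\rho\dashv_B\sigma_2$. $\sqsubseteq$ is the greatest fixed point of the monotone map $B\mapsto\sqsubseteq_B$ on preorders over $\mathcal{SC}$. $\mathcal M$ maps types to contracts homomorphically: $\mathsf{end}\mapsto\mathbf 1$, $![\mathtt t]S\mapsto!\mathtt t.\mathcal M(S)$, $?[\mathtt t]S\mapsto?\mathtt t.\mathcal M(S)$, $![T]S\mapsto!(\mathcal M(T)).\mathcal M(S)$,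 $?[T]S\mapsto?(\mathcal M(T)).\mathcal M(S)$, branch $\mapsto\sum ?l_i.\mathcal M(S_i)$, choice $\mapsto\bigoplus !l_i.\mathcal M(S_i)$, $\mu X.S\mapsto\mu x.\mathcal M(S)$, $X\mapsto x$. *)

From Stdlib Require Import List Arith.
Import ListNotations.

Section Defs.

(* BT: base types (preorder leb given separately); L: labels. *)
Context {BT L : Type}.

Inductive stype : Type :=
| SEnd : stype
| SInB : BT -> stype -> stype
| SOutB : BT -> stype -> stype
| SInS : stype -> stype -> stype
| SOutS : stype -> stype -> stype
| SBra : list (L * stype) -> stype
| SSel : list (L * stype) -> stype
| SMu : nat -> stype -> stype
| SVar : nat -> stype.

Fixpoint s_free (X : nat) (T : stype) : Prop :=
  match T with
  | SEnd => False
  | SInB _ T | SOutB _ T => s_free X T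
  | SInS M T | SOutS M T => s_free X M \/ s_free X T
  | SBra ls | SSel ls =>
      (fix f ls := match ls with [] => False | (_, T) :: r => s_free X T \/ f r end) ls
  | SMu Y T => X <> Y /\ s_free X T
  | SVar Y => X = Y
  end.

Fixpoint s_unguarded (X : nat) (T : stype) : Prop :=
  match T with
  | SVar Y => X = Y
  | SMu Y T => X <> Y /\ s_unguarded X T
  | _ => False
  end.

Fixpoint s_guarded (T : stype) : Prop :=
  match T with
  | SEnd | SVar _ => True
  | SInB _ T | SOutB _ T => s_guarded T
  | SInS M T | SOutS M T => s_guarded M /\ s_guarded T
  | SBra ls | SSel ls =>
      (fix f ls := match ls with [] => True | (_, T) :: r => s_guarded T /\ f r end) ls
  | SMu X T => ~ s_unguarded X T /\ s_guarded T
  end.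

Fixpoint s_wf (T : stype) : Prop :=
  match T with
  | SEnd | SVar _ => True
  | SInB _ T | SOutB _ T => s_wf T
  | SInS M T | SOutS M T => s_wf M /\ s_wf T
  | SBra ls | SSel ls =>
      ls <> [] /\ NoDup (map fst ls) /\
      (fix f ls := match ls with [] => True | (_, T) :: r => s_wf T /\ f r end) ls
  | SMu _ T => s_wf T
  end.

Definition ST (T : stype) : Prop :=
  s_wf T /\ s_guarded T /\ (forall X, ~ s_free X T).

(* substitution T[U/X]; only ever used with closed U *)
Fixpoint s_subst (X : nat) (U : stype) (T : stype) : stype :=
  match T with
  | SEnd => SEnd
  | SInB t T => SInB t (s_subst X U T)
  | SOutB t T => SOutB t (s_subst X U T)
  | SInS M T => SInS (s_subst X U M) (s_subst X U T)
  | SOutS M T => SOutS (s_subst X U M) (s_subst X U T)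
  | SBra ls => SBra (map (fun p => (fst p, s_subst X U (snd p))) ls)
  | SSel ls => SSel (map (fun p => (fst p, s_subst X U (snd p))) ls)
  | SMu Y T => if Nat.eqb X Y then SMu Y T else SMu Y (s_subst X U T)
  | SVar Y => if Nat.eqb X Y then U else SVar Y
  end.

Definition not_mu (T : stype) : Prop :=
  match T with SMu _ _ => False | _ => True end.

(* unfold as a relation: unfold T = U  <->  unfolds T U
   unfold(mu X.T') = unfold(T'[mu X.T'/X]); otherwise unfold(T) = T *)
Inductive unfolds : stype -> stype -> Prop :=
| unfolds_mu : forall X T' U,
    unfolds (s_subst X (SMu X T') T') U -> unfolds (SMu X T') U
| unfolds_other : forall T, not_mu T -> unfolds T T.

Section Subtyping.
Variable leb : BT -> BT -> Prop.

Definition sub_sim (R : stype -> stype -> Prop) : Prop :=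
  forall T S, R T S ->
    ST T /\ ST S /\
    (unfolds T SEnd -> unfolds S SEnd) /\
    (forall t1 S1, unfolds T (SInB t1 S1) ->
       exists t2 S2, unfolds S (SInB t2 S2) /\ R S1 S2 /\ leb t1 t2) /\
    (forall t1 S1, unfolds T (SOutB t1 S1) ->
       exists t2 S2, unfolds S (SOutB t2 S2) /\ R S1 S2 /\ leb t2 t1) /\
    (forall T1 S1, unfolds T (SOutS T1 S1) ->
       exists T2 S2, unfolds S (SOutS T2 S2) /\ R S1 S2 /\ R T2 T1) /\
    (forall T1 S1, unfolds T (SInS T1 S1) ->
       exists T2 S2, unfolds S (SInS T2 S2) /\ R S1 S2 /\ R T1 T2) /\
    (forall ls, unfolds T (SBra ls) ->
       exists ls', unfolds S (SBra ls') /\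
         forall l Ti, In (l, Ti) ls -> exists Si, In (l, Si) ls' /\ R Ti Si) /\
    (forall ls, unfolds T (SSel ls) ->
       exists ls', unfolds S (SSel ls') /\
         forall l Si, In (l, Si) ls' -> exists Ti, In (l, Ti) ls /\ R Ti Si).

(* subtyping: the greatest such relation (union of all simulations) *)
Definition subtype (T S : stype) : Prop :=
  exists R, sub_sim R /\ R T S.

Definition sbt_eq (T S : stype) : Prop := subtype T S /\ subtype S T.

End Subtyping.

Inductive contract : Type :=
| COne : contract
| CInB : BT -> contract -> contract
| COutB : BT -> contract -> contract
| COutC : contract -> contract -> contract
| CInC : contract -> contract -> contract
| CExt : list (L * contract) -> contract
| CInt : list (L * contract) -> contract
| CMu : nat -> contract -> contract
| CVar : nat -> contract.

Fixpoint c_free (X : nat) (T : contract) : Prop :=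
  match T with
  | COne => False
  | CInB _ T | COutB _ T => c_free X T
  | CInC M T | COutC M T => c_free X M \/ c_free X T
  | CExt ls | CInt ls =>
      (fix f ls := match ls with [] => False | (_, T) :: r => c_free X T \/ f r end) ls
  | CMu Y T => X <> Y /\ c_free X T
  | CVar Y => X = Y
  end.

Fixpoint c_unguarded (X : nat) (T : contract) : Prop :=
  match T with
  | CVar Y => X = Y
  | CMu Y T => X <> Y /\ c_unguarded X T
  | _ => False
  end.

Fixpoint c_guarded (T : contract) : Prop :=
  match T with
  | COne | CVar _ => True
  | CInB _ T | COutB _ T => c_guarded T
  | CInC M T | COutC M T => c_guarded M /\ c_guarded T
  | CExt ls | CInt ls =>
      (fix f ls := match ls with [] => True | (_, T) :: r => c_guarded T /\ f r end) ls
  | CMu X T => ~ c_unguarded X T /\ c_guarded T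
  end.

Fixpoint c_wf (T : contract) : Prop :=
  match T with
  | COne | CVar _ => True
  | CInB _ T | COutB _ T => c_wf T
  | CInC M T | COutC M T => c_wf M /\ c_wf T
  | CExt ls | CInt ls =>
      ls <> [] /\ NoDup (map fst ls) /\
      (fix f ls := match ls with [] => True | (_, T) :: r => c_wf T /\ f r end) ls
  | CMu _ T => c_wf T
  end.

Definition SC (s : contract) : Prop :=
  c_wf s /\ c_guarded s /\ (forall X, ~ c_free X s).

Fixpoint c_subst (X : nat) (U : contract) (T : contract) : contract :=
  match T with
  | COne => COne
  | CInB t T => CInB t (c_subst X U T)
  | COutB t T => COutB t (c_subst X U T)
  | CInC M T => CInC (c_subst X U M) (c_subst X U T)
  | COutC M T => COutC (c_subst X U M) (c_subst X U T)
  | CExt ls => CExt (map (fun p => (fst p, c_subst X U (snd p))) ls)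
  | CInt ls => CInt (map (fun p => (fst p, c_subst X U (snd p))) ls)
  | CMu Y T => if Nat.eqb X Y then CMu Y T else CMu Y (c_subst X U T)
  | CVar Y => if Nat.eqb X Y then U else CVar Y
  end.

(* visible actions (other than tick and tau) *)
Inductive act : Type :=
| AInB : BT -> act | AOutB : BT -> act
| AInC : contract -> act | AOutC : contract -> act
| AInL : L -> act | AOutL : L -> act.

(* 1 --tick--> *)
Definition ticks (s : contract) : Prop := s = COne.

Inductive cstep : contract -> act -> contract -> Prop :=
| cs_inB : forall t s, cstep (CInB t s) (AInB t) s
| cs_outB : forall t s, cstep (COutB t s) (AOutB t) s
| cs_inC : forall s' s, cstep (CInC s' s) (AInC s') s
| cs_outC : forall s' s, cstep (COutC s' s) (AOutC s') s
| cs_outL : forall l s, cstep (CInt [(l, s)]) (AOutL l) s   (* !l.s prefix *)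
| cs_ext : forall ls l s, In (l, s) ls -> cstep (CExt ls) (AInL l) s.

Inductive ctau : contract -> contract -> Prop :=
| ct_int : forall ls l s, 1 < length ls -> In (l, s) ls ->
    ctau (CInt ls) (CInt [(l, s)])
| ct_mu : forall x s, ctau (CMu x s) (c_subst x (CMu x s) s).

Section Compliance.
Variable leb : BT -> BT -> Prop.
Variable B : contract -> contract -> Prop.

Definition compat (a1 a2 : act) : Prop :=
  match a1, a2 with
  | AOutL l1, AInL l2 => l1 = l2
  | AInL l1, AOutL l2 => l1 = l2
  | AOutB t1, AInB t2 => leb t1 t2
  | AInB t1, AOutB t2 => leb t2 t1
  | AOutC s1, AInC s2 => B s1 s2
  | AInC s1, AOutC s2 => B s2 s1
  | _, _ => False
  end.

(* rho || sigma --tau_B--> rho' || sigma' *)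
Inductive ptau : contract -> contract -> contract -> contract -> Prop :=
| pt_l : forall r s r', ctau r r' -> ptau r s r' s
| pt_r : forall r s s', ctau s s' -> ptau r s r s'
| pt_sync : forall r s r' s' a1 a2,
    cstep r a1 r' -> cstep s a2 s' -> compat a1 a2 -> ptau r s r' s'.

Definition comply_sim (R : contract -> contract -> Prop) : Prop :=
  forall r s, R r s ->
    ((forall r' s', ~ ptau r s r' s') -> ticks r /\ ticks s) /\
    (forall r' s', ptau r s r' s' -> R r' s').

(* rho -|_B sigma : greatest such relation *)
Definition comply (r s : contract) : Prop :=
  exists R, comply_sim R /\ R r s.

Definition sqsubB (s1 s2 : contract) : Prop :=
  SC s1 /\ SC s2 /\ forall r, SC r -> comply r s1 -> comply r s2.

End Compliance.

Definition preorder_on_SC (B : contract -> contract -> Prop) : Prop :=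
  (forall x y, B x y -> SC x /\ SC y) /\
  (forall x, SC x -> B x x) /\
  (forall x y z, B x y -> B y z -> B x z).

(* [= : greatest fixed point of B |-> [=_B on preorders over SC,
   i.e. the union of all post-fixed points (Knaster-Tarski). *)
Definition sqsub (leb : BT -> BT -> Prop) (s1 s2 : contract) : Prop :=
  exists B, preorder_on_SC B /\
    (forall x y, B x y -> sqsubB leb B x y) /\ B s1 s2.

Fixpoint Mmap (T : stype) : contract :=
  match T with
  | SEnd => COne
  | SInB t U => CInB t (Mmap U)
  | SOutB t U => COutB t (Mmap U)
  | SInS T U => CInC (Mmap T) (Mmap U)
  | SOutS T U => COutC (Mmap T) (Mmap U)
  | SBra ls => CExt (map (fun p => (fst p, Mmap (snd p))) ls)
  | SSel ls => CInt (map (fun p => (fst p, Mmap (snd p))) ls)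
  | SMu X U => CMu X (Mmap U)
  | SVar X => CVar X
  end.

End Defs.

From Stdlib Require Import List Arith Lia Classical.
Import ListNotations.

(* (=>) Unfolding recursion and comparing heads constructor by constructor, equivalent types
   are mapped to contracts that are bisimilar, with base types compared up to the equivalence
   induced by [leb].  Bisimilar contracts have the same clients, so "bisimilar or equal" is a
   preorder that is a post-fixed point of [B |-> sqsubB B] and relates [Mmap S] and [Mmap T].

   (<=) The relation "[Mmap T] refines [Mmap S] and vice versa, each for some post-fixed
   preorder" is a subtyping simulation.  The head of [S] is read off by tests: the dual of a
   type (directions swapped, recursion kept, carried types closed) complies with its image,
   and prefixing it with the action the head of [T] expects gives a client of [Mmap T], whose
   compliance with [Mmap S] forces the head of [S].  For a selection the test offers the dual
   on every label but one, where it continues with an arbitrary client; building it needs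
   decidable equality of labels, which follows from their countability. *)

Lemma in_map_snd {A B C : Type} (f : B -> C) (ls : list (A * B)) l c :
  In (l, c) (map (fun p => (fst p, f (snd p))) ls) <-> exists b, In (l, b) ls /\ c = f b.
Proof.
  rewrite in_map_iff. split.
  - intros ([l' b] & E & H). injection E as <- <-. eauto.
  - intros (b & H & ->). now exists (l, b).
Qed.

Lemma map_fst_map_snd {A B C : Type} (f : B -> C) (ls : list (A * B)) :
  map fst (map (fun p => (fst p, f (snd p))) ls) = map fst ls.
Proof. induction ls; simpl; congruence. Qed.

Lemma NoDup_fst_in_eq {A B : Type} (ls : list (A * B)) l a b :
  NoDup (map fst ls) -> In (l, a) ls -> In (l, b) ls -> a = b.
Proof.
  induction ls as [|[l' c] r IH]; simpl; intros Hn Ha Hb; [contradiction|].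
  inversion Hn as [|? ? Hl Hr]; subst.
  destruct Ha as [Ea|Ea], Hb as [Eb|Eb].
  - congruence.
  - injection Ea as <- <-. destruct Hl. exact (in_map fst _ _ Eb).
  - injection Eb as <- <-. destruct Hl. exact (in_map fst _ _ Ea).
  - auto.
Qed.

Lemma in_pairing {A X Y : Type} (xs : list (A * X)) (ys : list (A * Y))
    (P : X -> Y -> Prop) (Q : Y -> X -> Prop) :
  NoDup (map fst xs) ->
  (forall l a, In (l, a) xs -> exists b, In (l, b) ys /\ P a b) ->
  (forall l b, In (l, b) ys -> exists a, In (l, a) xs /\ Q b a) ->
  forall l a, In (l, a) xs -> exists b, In (l, b) ys /\ P a b /\ Q b a.
Proof.
  intros Hnd Hxy Hyx l a Hin. destruct (Hxy l a Hin) as (b & Hb & Hp).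
  destruct (Hyx l b Hb) as (a' & Ha' & Hq). rewrite (NoDup_fst_in_eq xs l a' a Hnd Ha' Hin) in Hq.
  eauto.
Qed.

Lemma singleton_of_in {X : Type} (x : X) xs : In x xs -> length xs <= 1 -> xs = [x].
Proof.
  destruct xs as [|y [|z r]]; simpl; intros H Hl; try lia; try contradiction.
  now destruct H as [->|[]].
Qed.

Section TypeSyntax.
Context {BT L : Type}.
Notation stype := (@stype BT L).
Implicit Types (ls : list (L * stype)) (T U V M : stype).

Section NestedInd.
Variable P : stype -> Prop.
Hypothesis HEnd : P SEnd.
Hypothesis HInB : forall t U, P U -> P (SInB t U).
Hypothesis HOutB : forall t U, P U -> P (SOutB t U).
Hypothesis HInS : forall M U, P M -> P U -> P (SInS M U).
Hypothesis HOutS : forall M U, P M -> P U -> P (SOutS M U).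
Hypothesis HBra : forall ls, (forall l U, In (l, U) ls -> P U) -> P (SBra ls).
Hypothesis HSel : forall ls, (forall l U, In (l, U) ls -> P U) -> P (SSel ls).
Hypothesis HMu : forall x U, P U -> P (SMu x U).
Hypothesis HVar : forall x, P (SVar x).

Fixpoint stype_nested_ind T : P T :=
  let fix branches ls : forall l U, In (l, U) ls -> P U :=
    match ls with
    | [] => fun l U H => False_ind _ H
    | (l', U') :: r => fun l U H =>
        match H with
        | or_introl E => eq_ind (l', U') (fun p => P (snd p)) (stype_nested_ind U') (l, U) E
        | or_intror H' => branches r l U H'
        end
    end in
  match T with
  | SEnd => HEnd
  | SInB t U => HInB t U (stype_nested_ind U)
  | SOutB t U => HOutB t U (stype_nested_ind U)
  | SInS M U => HInS M U (stype_nested_ind M) (stype_nested_ind U)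
  | SOutS M U => HOutS M U (stype_nested_ind M) (stype_nested_ind U)
  | SBra ls => HBra ls (branches ls)
  | SSel ls => HSel ls (branches ls)
  | SMu x U => HMu x U (stype_nested_ind U)
  | SVar x => HVar x
  end.
End NestedInd.

Lemma s_free_bra X ls : s_free X (SBra ls) <-> exists l T, In (l, T) ls /\ s_free X T.
Proof.
  simpl. induction ls as [|[l T] r IH]; simpl.
  - firstorder.
  - rewrite IH. split.
    + intros [H|(l'&T'&?&?)]; eauto.
    + intros (l'&T'&[E|E]&H); [injection E as <- <-|]; eauto.
Qed.
Lemma s_free_sel X ls : s_free X (SSel ls) <-> exists l T, In (l, T) ls /\ s_free X T.
Proof. exact (s_free_bra X ls). Qed.

Lemma s_guarded_bra ls : s_guarded (SBra ls) <-> forall l T, In (l, T) ls -> s_guarded T.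
Proof.
  simpl. induction ls as [|[l T] r IH]; simpl.
  - firstorder.
  - rewrite IH. split.
    + intros [H1 H2] l' T' [E|E]; [injection E as <- <-|]; eauto.
    + intros H. split; [apply (H l); now left|intros l' T' Hin; apply (H l'); now right].
Qed.
Lemma s_guarded_sel ls : s_guarded (SSel ls) <-> forall l T, In (l, T) ls -> s_guarded T.
Proof. exact (s_guarded_bra ls). Qed.

Lemma s_wf_bra ls :
  s_wf (SBra ls) <-> ls <> [] /\ NoDup (map fst ls) /\ forall l T, In (l, T) ls -> s_wf T.
Proof.
  enough (E : (fix f ls := match ls with [] => True | (_, T) :: r => s_wf T /\ f r end) ls
              <-> forall l T, In (l, T) ls -> s_wf T) by (simpl; now rewrite E).
  induction ls as [|[l T] r IH]; simpl.
  - firstorder.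
  - rewrite IH. split.
    + intros [H1 H2] l' T' [E|E]; [injection E as <- <-|]; eauto.
    + intros H. split; [apply (H l); now left|intros l' T' Hin; apply (H l'); now right].
Qed.
Lemma s_wf_sel ls :
  s_wf (SSel ls) <-> ls <> [] /\ NoDup (map fst ls) /\ forall l T, In (l, T) ls -> s_wf T.
Proof. exact (s_wf_bra ls). Qed.

Definition s_closed T := forall y, ~ s_free y T.

Lemma s_unguarded_free y T : s_unguarded y T -> s_free y T.
Proof. induction T; simpl; intuition. Qed.

Lemma s_free_subst y X U T :
  s_free y (s_subst X U T) -> (s_free y T /\ y <> X) \/ s_free y U.
Proof.
  induction T using stype_nested_ind; cbn [s_subst]; intros Hf.
  - contradiction.
  - simpl in *; auto.
  - simpl in *; auto.
  - simpl in *; intuition.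
  - simpl in *; intuition.
  - rewrite s_free_bra in Hf |- *. destruct Hf as (l & T' & Hin & Hf).
    apply in_map_snd in Hin as (b & Hin & ->).
    destruct (H l b Hin Hf) as [[? ?]|?]; eauto 7.
  - rewrite s_free_sel in Hf |- *. destruct Hf as (l & T' & Hin & Hf).
    apply in_map_snd in Hin as (b & Hin & ->).
    destruct (H l b Hin Hf) as [[? ?]|?]; eauto 7.
  - destruct (Nat.eqb_spec X x); simpl in *.
    + subst. intuition.
    + destruct Hf as [? Hf]. apply IHT in Hf. intuition.
  - destruct (Nat.eqb_spec X x); simpl in *; [auto|subst; auto].
Qed.

Lemma s_unguarded_subst y X U T :
  s_unguarded y (s_subst X U T) -> s_unguarded y T \/ s_unguarded y U.
Proof.
  induction T; simpl; auto; intros H; destruct (Nat.eqb_spec X n); simpl in H; auto.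
  destruct H as [? H]. apply IHT in H. intuition.
Qed.

Lemma s_wf_subst X U T : s_wf U -> s_wf T -> s_wf (s_subst X U T).
Proof.
  intros HU. induction T using stype_nested_ind; cbn [s_subst]; intros Hw.
  - exact I.
  - simpl in *; auto.
  - simpl in *; auto.
  - simpl in *; intuition.
  - simpl in *; intuition.
  - rewrite s_wf_bra in Hw |- *. destruct Hw as (Hne & Hnd & Hall).
    rewrite map_fst_map_snd. split; [destruct ls; simpl; congruence|split; [exact Hnd|]].
    intros l T' Hin. apply in_map_snd in Hin as (b & Hin & ->). eauto.
  - rewrite s_wf_sel in Hw |- *. destruct Hw as (Hne & Hnd & Hall).
    rewrite map_fst_map_snd. split; [destruct ls; simpl; congruence|split; [exact Hnd|]].
    intros l T' Hin. apply in_map_snd in Hin as (b & Hin & ->). eauto.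
  - destruct (Nat.eqb X x); simpl in *; auto.
  - destruct (Nat.eqb X x); simpl; auto.
Qed.

Lemma s_guarded_subst X U T :
  s_guarded U -> s_closed U -> s_guarded T -> s_guarded (s_subst X U T).
Proof.
  intros HU HC. induction T using stype_nested_ind; cbn [s_subst]; intros Hg.
  - exact I.
  - simpl in *; auto.
  - simpl in *; auto.
  - simpl in *; intuition.
  - simpl in *; intuition.
  - rewrite s_guarded_bra in Hg |- *.
    intros l T' Hin. apply in_map_snd in Hin as (b & Hin & ->). eauto.
  - rewrite s_guarded_sel in Hg |- *.
    intros l T' Hin. apply in_map_snd in Hin as (b & Hin & ->). eauto.
  - simpl in Hg. destruct (Nat.eqb X x); simpl; [tauto|].
    split; [|tauto]. intros [Hu|Hu]%s_unguarded_subst; [tauto|].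
    exact (HC x (s_unguarded_free _ _ Hu)).
  - destruct (Nat.eqb X x); simpl; auto.
Qed.

Lemma s_subst_fresh X W T : ~ s_free X T -> s_subst X W T = T.
Proof.
  induction T using stype_nested_ind; cbn [s_subst]; intros Hf;
    try (simpl in Hf; f_equal; intuition; fail).
  - f_equal. rewrite s_free_bra in Hf. rewrite <- (map_id ls) at 2. apply map_ext_in.
    intros [l b] Hin. simpl. f_equal. apply (H l b Hin). intro. apply Hf. eauto.
  - f_equal. rewrite s_free_sel in Hf. rewrite <- (map_id ls) at 2. apply map_ext_in.
    intros [l b] Hin. simpl. f_equal. apply (H l b Hin). intro. apply Hf. eauto.
  - simpl in Hf. destruct (Nat.eqb_spec X x); auto. f_equal. apply IHT. auto.
  - simpl in Hf. destruct (Nat.eqb_spec X x); congruence.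
Qed.

Lemma s_subst_not_free x Z M : ~ s_free x Z -> ~ s_free x (s_subst x Z M).
Proof. intros H [[_ ?]|?]%s_free_subst; auto. Qed.

Lemma ST_mu_unfold x U : ST (SMu x U) -> ST (s_subst x (SMu x U) U).
Proof.
  intros (W & G & C). simpl in W, G. split; [|split].
  - apply s_wf_subst; simpl; auto.
  - apply s_guarded_subst; simpl; tauto.
  - intros y [[H1 H2]|H]%s_free_subst; apply (C y); simpl; auto.
Qed.

Lemma unfolds_ST T U : unfolds T U -> ST T -> ST U.
Proof. induction 1; auto using ST_mu_unfold. Qed.

Lemma unfolds_not_mu T U : unfolds T U -> not_mu U.
Proof. induction 1; auto. Qed.

Lemma mu_or_not_mu T : (exists x U, T = SMu x U) \/ not_mu T.
Proof. destruct T; simpl; eauto. Qed.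

Lemma unfolds_det T U1 U2 : unfolds T U1 -> unfolds T U2 -> U1 = U2.
Proof.
  intros H; revert U2; induction H; intros U2 H2; inversion H2; subst; simpl in *; auto; contradiction.
Qed.

Fixpoint mu_depth T : nat := match T with SMu _ U => S (mu_depth U) | _ => 0 end.

Lemma mu_depth_subst X U T : ~ s_unguarded X T -> mu_depth (s_subst X U T) = mu_depth T.
Proof.
  induction T; simpl; intros; auto; destruct (Nat.eqb_spec X n); simpl; intuition.
Qed.

(* Guardedness makes the number of leading binders drop at each unfolding step. *)
Lemma unfolds_exists T : ST T -> exists U, unfolds T U.
Proof.
  remember (mu_depth T) as n. revert T Heqn. induction n; intros T E H;
    destruct T as [| | | | | | |x U|]; try discriminate; try (eexists; apply unfolds_other; exact I).
  injection E as E. destruct (IHn (s_subst x (SMu x U) U)) as [V HV].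
  - rewrite mu_depth_subst; auto. destruct H as (_ & G & _). simpl in G. tauto.
  - now apply ST_mu_unfold.
  - exists V. now constructor.
Qed.

Lemma ST_inB t U : ST (SInB t U) -> ST U.
Proof. intros (W & G & C). split; [|split]; simpl in *; auto. Qed.
Lemma ST_outB t U : ST (SOutB t U) -> ST U.
Proof. intros (W & G & C). split; [|split]; simpl in *; auto. Qed.
Lemma ST_inS M U : ST (SInS M U) -> ST M /\ ST U.
Proof.
  intros (W & G & C). simpl in *.
  split; (split; [|split]); try tauto; intros y Hy; apply (C y); simpl; auto.
Qed.
Lemma ST_outS M U : ST (SOutS M U) -> ST M /\ ST U.
Proof. exact (ST_inS M U). Qed.
Lemma ST_bra ls : ST (SBra ls) -> ls <> [] /\ NoDup (map fst ls) /\ forall l T, In (l, T) ls -> ST T.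
Proof.
  intros (W & G & C). rewrite s_wf_bra in W. rewrite s_guarded_bra in G. destruct W as (A & B & D).
  split; [|split]; auto. intros l T Hin. split; [|split]; eauto.
  intros y Hy. apply (C y). apply s_free_bra. eauto.
Qed.
Lemma ST_sel ls : ST (SSel ls) -> ls <> [] /\ NoDup (map fst ls) /\ forall l T, In (l, T) ls -> ST T.
Proof. exact (ST_bra ls). Qed.

End TypeSyntax.

Section ContractSyntax.
Context {BT L : Type}.
Notation stype := (@stype BT L).
Notation contract := (@contract BT L).
Implicit Types (ls : list (L * stype)) (T U : stype) (cs : list (L * contract)) (s u : contract).
Notation mapM ls := (map (fun p => (fst p, Mmap (snd p))) ls).

Lemma c_free_ext X cs : c_free X (CExt cs) <-> exists l c, In (l, c) cs /\ c_free X c.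
Proof.
  simpl. induction cs as [|[l c] r IH]; simpl.
  - firstorder.
  - rewrite IH. split.
    + intros [H|(l'&c'&?&?)]; eauto.
    + intros (l'&c'&[E|E]&H); [injection E as <- <-|]; eauto.
Qed.
Lemma c_free_int X cs : c_free X (CInt cs) <-> exists l c, In (l, c) cs /\ c_free X c.
Proof. exact (c_free_ext X cs). Qed.

Lemma c_guarded_ext cs : c_guarded (CExt cs) <-> forall l c, In (l, c) cs -> c_guarded c.
Proof.
  simpl. induction cs as [|[l c] r IH]; simpl.
  - firstorder.
  - rewrite IH. split.
    + intros [H1 H2] l' c' [E|E]; [injection E as <- <-|]; eauto.
    + intros H. split; [apply (H l); now left|intros l' c' Hin; apply (H l'); now right].
Qed.
Lemma c_guarded_int cs : c_guarded (CInt cs) <-> forall l c, In (l, c) cs -> c_guarded c.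
Proof. exact (c_guarded_ext cs). Qed.

Lemma c_wf_ext cs :
  c_wf (CExt cs) <-> cs <> [] /\ NoDup (map fst cs) /\ forall l c, In (l, c) cs -> c_wf c.
Proof.
  enough (E : (fix f cs := match cs with [] => True | (_, c) :: r => c_wf c /\ f r end) cs
              <-> forall l c, In (l, c) cs -> c_wf c) by (simpl; now rewrite E).
  induction cs as [|[l c] r IH]; simpl.
  - firstorder.
  - rewrite IH. split.
    + intros [H1 H2] l' c' [E|E]; [injection E as <- <-|]; eauto.
    + intros H. split; [apply (H l); now left|intros l' c' Hin; apply (H l'); now right].
Qed.
Lemma c_wf_int cs :
  c_wf (CInt cs) <-> cs <> [] /\ NoDup (map fst cs) /\ forall l c, In (l, c) cs -> c_wf c.
Proof. exact (c_wf_ext cs). Qed.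

Lemma SC_ext cs :
  cs <> [] -> NoDup (map fst cs) -> (forall l c, In (l, c) cs -> SC c) -> SC (CExt cs).
Proof.
  intros Hne Hnd Hall. split; [|split].
  - apply c_wf_ext. split; [auto|split; [auto|]]. intros l c Hin. apply (Hall l c Hin).
  - apply c_guarded_ext. intros l c Hin. apply (Hall l c Hin).
  - intros X (l & c & Hin & Hf)%c_free_ext. exact (proj2 (proj2 (Hall l c Hin)) X Hf).
Qed.

Lemma SC_int cs :
  cs <> [] -> NoDup (map fst cs) -> (forall l c, In (l, c) cs -> SC c) -> SC (CInt cs).
Proof. exact (SC_ext cs). Qed.

Lemma SC_single l s : SC s -> SC (CInt [(l, s)]).
Proof.
  intros Hs. apply SC_int.
  - discriminate.
  - repeat constructor. intros [].
  - now intros l' c [[= <- <-]|[]].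
Qed.

Lemma SC_outB t s : SC s -> SC (COutB t s).
Proof. intros (W & G & C). split; [|split]; simpl; auto. Qed.
Lemma SC_inB t s : SC s -> SC (CInB t s).
Proof. intros (W & G & C). split; [|split]; simpl; auto. Qed.
Lemma SC_outC c s : SC c -> SC s -> SC (COutC c s).
Proof.
  intros (W & G & C) (W' & G' & C'). split; [|split]; simpl; auto.
  intros X [H|H]; [eapply C|eapply C']; eauto.
Qed.
Lemma SC_inC c s : SC c -> SC s -> SC (CInC c s).
Proof. exact (SC_outC c s). Qed.

Lemma SC_one : SC (@COne BT L).
Proof. repeat split. intros _ []. Qed.

Lemma Mmap_subst X U T : Mmap (s_subst X U T) = c_subst X (Mmap U) (Mmap T).
Proof.
  induction T using stype_nested_ind; simpl; try (f_equal; auto; fail).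
  - f_equal. rewrite !map_map. apply map_ext_in. intros [l b] Hin. simpl. f_equal. eauto.
  - f_equal. rewrite !map_map. apply map_ext_in. intros [l b] Hin. simpl. f_equal. eauto.
  - destruct (Nat.eqb X x); simpl; f_equal; auto.
  - destruct (Nat.eqb X x); simpl; auto.
Qed.

Lemma Mmap_free y T : c_free y (Mmap T) -> s_free y T.
Proof.
  induction T using stype_nested_ind; intro Hf; try (simpl in *; intuition; fail).
  - change (c_free y (CExt (mapM ls))) in Hf. apply s_free_bra.
    apply c_free_ext in Hf as (l & c & Hin & Hf). apply in_map_snd in Hin as (b & Hin & ->). eauto.
  - change (c_free y (CInt (mapM ls))) in Hf. apply s_free_sel.
    apply c_free_int in Hf as (l & c & Hin & Hf). apply in_map_snd in Hin as (b & Hin & ->). eauto.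
Qed.

Lemma Mmap_unguarded y T : c_unguarded y (Mmap T) -> s_unguarded y T.
Proof. induction T; simpl; intuition. Qed.

Lemma Mmap_guarded T : s_guarded T -> c_guarded (Mmap T).
Proof.
  induction T using stype_nested_ind; intro Hg; try (simpl in *; intuition; fail).
  - change (c_guarded (CExt (mapM ls))). apply c_guarded_ext. rewrite s_guarded_bra in Hg.
    intros l c Hin. apply in_map_snd in Hin as (b & Hin & ->). eauto.
  - change (c_guarded (CInt (mapM ls))). apply c_guarded_int. rewrite s_guarded_sel in Hg.
    intros l c Hin. apply in_map_snd in Hin as (b & Hin & ->). eauto.
  - simpl in *. destruct Hg as [H1 H2]. split; auto. intros ?%Mmap_unguarded. tauto.
Qed.

Lemma Mmap_wf T : s_wf T -> c_wf (Mmap T).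
Proof.
  induction T using stype_nested_ind; intro Hw; try (simpl in *; intuition; fail).
  - change (c_wf (CExt (mapM ls))). apply c_wf_ext. apply s_wf_bra in Hw as (A & B & C).
    rewrite map_fst_map_snd. split; [destruct ls; simpl; congruence|split; [exact B|]].
    intros l c Hin. apply in_map_snd in Hin as (b & Hin & ->). eauto.
  - change (c_wf (CInt (mapM ls))). apply c_wf_int. apply s_wf_sel in Hw as (A & B & C).
    rewrite map_fst_map_snd. split; [destruct ls; simpl; congruence|split; [exact B|]].
    intros l c Hin. apply in_map_snd in Hin as (b & Hin & ->). eauto.
Qed.

Lemma Mmap_SC T : ST T -> SC (Mmap T).
Proof.
  intros (W & G & C). split; [|split].
  - now apply Mmap_wf.
  - now apply Mmap_guarded.
  - intros y Hf%Mmap_free. exact (C y Hf).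
Qed.

Definition c_not_mu s : Prop := match s with CMu _ _ => False | _ => True end.

Lemma c_mu_or_not_mu s : (exists x u, s = CMu x u) \/ c_not_mu s.
Proof. destruct s; simpl; eauto. Qed.

Inductive cunfolds : contract -> contract -> Prop :=
| cunfolds_mu : forall x s u, cunfolds (c_subst x (CMu x s) s) u -> cunfolds (CMu x s) u
| cunfolds_other : forall s, c_not_mu s -> cunfolds s s.

Inductive mu_star : contract -> contract -> Prop :=
| mu_star_refl : forall s, mu_star s s
| mu_star_step : forall x s u, mu_star (c_subst x (CMu x s) s) u -> mu_star (CMu x s) u.

Lemma cunfolds_mu_star s u : cunfolds s u -> mu_star s u.
Proof. induction 1; constructor; auto. Qed.

Lemma mu_star_snoc s0 x s : mu_star s0 (CMu x s) -> mu_star s0 (c_subst x (CMu x s) s).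
Proof.
  remember (CMu x s) as m. induction 1; subst; repeat constructor; auto.
Qed.

Lemma mu_star_cunfolds s0 s u : mu_star s0 s -> cunfolds s u -> cunfolds s0 u.
Proof. induction 1; auto. constructor. auto. Qed.

Lemma cunfolds_det s u1 u2 : cunfolds s u1 -> cunfolds s u2 -> u1 = u2.
Proof.
  intros H; revert u2; induction H; intros u2 H2; inversion H2; subst; simpl in *; auto; contradiction.
Qed.

Lemma Mmap_unfolds T U : unfolds T U -> cunfolds (Mmap T) (Mmap U).
Proof.
  induction 1.
  - constructor. now rewrite (Mmap_subst X (SMu X T') T') in IHunfolds.
  - apply cunfolds_other. destruct T; simpl in *; auto.
Qed.

End ContractSyntax.

Section Compliance.
Context {BT L : Type}.
Notation contract := (@contract BT L).
Implicit Types (cs : list (L * contract)) (r s u : contract).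
Variable leb : BT -> BT -> Prop.
Variable B : contract -> contract -> Prop.
Notation comply := (comply leb B).
Notation ptau := (ptau leb B).

Lemma cstep_int_inv cs a s : cstep (CInt cs) a s -> exists l, cs = [(l, s)] /\ a = AOutL l.
Proof. intros H. inversion H; subst. eauto. Qed.
Lemma cstep_ext_inv cs a s : cstep (CExt cs) a s -> exists l, In (l, s) cs /\ a = AInL l.
Proof. intros H. inversion H; subst. eauto. Qed.
Lemma ctau_int_inv cs s :
  ctau (CInt cs) s -> exists l c, 1 < length cs /\ In (l, c) cs /\ s = CInt [(l, c)].
Proof. intros H. inversion H; subst. eauto. Qed.
Lemma ctau_single l c s : ~ ctau (CInt [(l, c)]) s.
Proof. intros (? & ? & Hl & _)%ctau_int_inv. simpl in Hl. lia. Qed.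

Lemma comply_ptau r s r' s' : comply r s -> ptau r s r' s' -> comply r' s'.
Proof. intros (R & HR & Hr) Hp. exists R. split; auto. now apply (HR r s Hr). Qed.

Lemma comply_stuck r s : comply r s -> (forall r' s', ~ ptau r s r' s') -> ticks r /\ ticks s.
Proof. intros (R & HR & Hr) Hp. now apply (HR r s Hr). Qed.

Lemma comply_intro r s : (exists r' s', ptau r s r' s') ->
  (forall r' s', ptau r s r' s' -> comply r' s') -> comply r s.
Proof.
  intros Hex Hall. exists (fun a b => (a = r /\ b = s) \/ comply a b). split; auto.
  intros a b [[-> ->]|Hc]; split.
  - intros Hn. destruct Hex as (r' & s' & Hp). destruct (Hn r' s' Hp).
  - auto.
  - now apply comply_stuck.
  - eauto using comply_ptau.
Qed.

Lemma comply_one_one : comply COne COne.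
Proof.
  exists (fun a b => a = COne /\ b = COne). split; auto.
  intros a b [-> ->]. split.
  - now split.
  - intros r' s' Hp. inversion Hp as [? ? ? H|? ? ? H|? ? ? ? ? ? H]; inversion H.
Qed.

Lemma comply_mu_star r s u : comply r s -> mu_star s u -> comply r u.
Proof.
  intros H Hm; revert r H; induction Hm; intros r H; auto.
  apply IHHm. eapply comply_ptau; eauto. apply pt_r. constructor.
Qed.

Lemma comply_cunfolds r s u : comply r s -> cunfolds s u -> comply r u.
Proof. eauto using comply_mu_star, cunfolds_mu_star. Qed.

Lemma comply_mu_star_inv r s u : mu_star s u -> comply r u -> comply r s.
Proof.
  intros Hm Hc. exists (fun r s => exists u, mu_star s u /\ comply r u). split; eauto.
  clear. intros r s (u & Hm & Hc). destruct Hm as [s|x s0 u Hm]; split.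
  - now apply comply_stuck.
  - intros r' s' Hp. exists s'. split; [constructor|]. eapply comply_ptau; eauto.
  - intros Hn. destruct (Hn r (c_subst x (CMu x s0) s0)). apply pt_r. constructor.
  - intros r' s' Hp. inversion Hp as [? ? ? H|? ? ? H|? ? ? ? ? ? ? H]; subst.
    + exists u. split; [now constructor|]. eapply comply_ptau; eauto. now apply pt_l.
    + inversion H; subst. eauto.
    + inversion H.
Qed.

Lemma comply_choice r cs l c : comply r (CInt cs) -> In (l, c) cs -> comply r (CInt [(l, c)]).
Proof.
  intros Hc Hin. destruct (Nat.lt_ge_cases 1 (length cs)) as [Hlt|Hge].
  - eapply comply_ptau; eauto. apply pt_r. now apply ct_int.
  - now rewrite <- (singleton_of_in _ _ Hin Hge).
Qed.

End Compliance.

Section Dual.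
Context {BT L : Type}.
Notation stype := (@stype BT L).
Implicit Types (ls : list (L * stype)) (T U V M Z : stype) (e : list (nat * stype)).

(* [e] maps each recursion variable in scope to the (closed) original recursive type it
   stands for; carried types are closed with [e] because they are not dualised. *)
Fixpoint env_subst e M : stype :=
  match e with [] => M | (x, V) :: e' => env_subst e' (s_subst x V M) end.

Fixpoint s_dual e T : stype :=
  match T with
  | SEnd => SEnd
  | SInB t U => SOutB t (s_dual e U)
  | SOutB t U => SInB t (s_dual e U)
  | SInS M U => SOutS (env_subst e M) (s_dual e U)
  | SOutS M U => SInS (env_subst e M) (s_dual e U)
  | SBra ls => SSel (map (fun p => (fst p, s_dual e (snd p))) ls)
  | SSel ls => SBra (map (fun p => (fst p, s_dual e (snd p))) ls)
  | SMu x U => SMu x (s_dual ((x, env_subst e (SMu x U)) :: e) U)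
  | SVar x => SVar x
  end.

Definition env_closed e := forall x V, In (x, V) e -> s_closed V.

Lemma env_closed_cons x V e : s_closed V -> env_closed e -> env_closed ((x, V) :: e).
Proof. intros H1 H2 y W [[= <- <-]|E]; eauto. Qed.

Lemma env_subst_free e y M :
  env_closed e -> s_free y (env_subst e M) -> s_free y M /\ ~ In y (map fst e).
Proof.
  revert M; induction e as [|[x V] e IH]; simpl; intros M Hc Hf; [auto|].
  destruct (IH _ (fun z W Hin => Hc z W (or_intror Hin)) Hf) as [[[Hf' Hne]|Hf']%s_free_subst Hn].
  - split; [exact Hf'|intros [E|E]; [congruence|auto]].
  - destruct (Hc x V (or_introl eq_refl) y Hf').
Qed.

Lemma env_subst_closed e M : s_closed M -> env_subst e M = M.
Proof.
  revert M; induction e as [|[x V] e IH]; simpl; intros M H; auto.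
  rewrite s_subst_fresh; auto.
Qed.

Lemma env_subst_ST e M : (forall x V, In (x, V) e -> ST V) ->
  (forall z, s_free z M -> In z (map fst e)) -> s_wf M -> s_guarded M -> ST (env_subst e M).
Proof.
  intros He Hfree Hw Hg.
  assert (Hcl : env_closed e) by (intros x V Hin; apply He in Hin as (_ & _ & ?); auto).
  split; [|split].
  - clear Hfree Hg Hcl. revert M Hw; induction e as [|[x V] e IH]; simpl; intros M Hw; auto.
    apply IH; [intros y W Hin; exact (He y W (or_intror Hin))|].
    apply s_wf_subst; auto. exact (proj1 (He x V (or_introl eq_refl))).
  - clear Hfree Hw. revert M Hg Hcl; induction e as [|[x V] e IH]; simpl; intros M Hg Hcl; auto.
    destruct (He x V (or_introl eq_refl)) as (_ & HgV & HcV).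
    apply IH; [intros y W Hin; exact (He y W (or_intror Hin))| |].
    2: intros y W Hin; exact (Hcl y W (or_intror Hin)).
    now apply s_guarded_subst.
  - intros z (Hz & Hn)%env_subst_free; auto.
Qed.

Lemma s_dual_ext T : forall e1 e2,
  (forall M, env_subst e1 M = env_subst e2 M) -> s_dual e1 T = s_dual e2 T.
Proof.
  induction T using stype_nested_ind; intros e1 e2 He; simpl; try (f_equal; auto; fail).
  - f_equal. apply map_ext_in. intros [l b] Hin. simpl. f_equal. eauto.
  - f_equal. apply map_ext_in. intros [l b] Hin. simpl. f_equal. eauto.
  - f_equal. rewrite He. apply IHT. intros M. simpl. now rewrite He.
Qed.

Lemma s_dual_agree T : forall e1 e2, env_closed e1 -> env_closed e2 ->
  (forall z, s_free z T -> In z (map fst e1)) ->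
  (forall M, (forall z, s_free z M -> s_free z T) -> env_subst e1 M = env_subst e2 M) ->
  s_dual e1 T = s_dual e2 T.
Proof.
  induction T using stype_nested_ind; intros e1 e2 C1 C2 D1 Ag; cbn [s_dual].
  - reflexivity.
  - f_equal. auto.
  - f_equal. auto.
  - f_equal; [apply Ag; simpl; auto|apply IHT2; auto; intros; [apply D1|apply Ag]; simpl; auto].
  - f_equal; [apply Ag; simpl; auto|apply IHT2; auto; intros; [apply D1|apply Ag]; simpl; auto].
  - f_equal. apply map_ext_in. intros [l b] Hin. simpl. f_equal.
    apply (H l b Hin); auto; intros; [apply D1|apply Ag]; auto; intros; apply s_free_bra; eauto.
  - f_equal. apply map_ext_in. intros [l b] Hin. simpl. f_equal.
    apply (H l b Hin); auto; intros; [apply D1|apply Ag]; auto; intros; apply s_free_sel; eauto.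
  - assert (EZ : env_subst e1 (SMu x T) = env_subst e2 (SMu x T)) by (apply Ag; auto).
    assert (CZ : s_closed (env_subst e1 (SMu x T))).
    { intros y (Hy & Hn)%env_subst_free; auto. }
    rewrite <- EZ. f_equal. apply IHT; [now apply env_closed_cons|now apply env_closed_cons| |].
    + intros z Hz. simpl. destruct (Nat.eq_dec x z); auto. right. apply D1. simpl. auto.
    + intros M HM. simpl. apply Ag. intros z [[Hz Hne]|Hz]%s_free_subst.
      * simpl. auto.
      * destruct (CZ z Hz).
  - reflexivity.
Qed.

Lemma s_dual_closed V e1 e2 :
  s_closed V -> env_closed e1 -> env_closed e2 -> s_dual e1 V = s_dual e2 V.
Proof.
  intros HV C1 C2. apply s_dual_agree; [exact C1|exact C2| |].
  - intros z Hz. destruct (HV z Hz).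
  - intros M HM. rewrite !env_subst_closed; [reflexivity| |]; intros z Hz; exact (HV z (HM z Hz)).
Qed.

Lemma s_subst_comm X Y V Z M : s_closed V -> s_closed Z -> X <> Y ->
  s_subst X V (s_subst Y Z M) = s_subst Y Z (s_subst X V M).
Proof.
  intros HV HZ Hxy. induction M using stype_nested_ind; cbn [s_subst]; try (f_equal; auto; fail).
  - f_equal. rewrite !map_map. apply map_ext_in. intros [l b] Hin. simpl. f_equal. eauto.
  - f_equal. rewrite !map_map. apply map_ext_in. intros [l b] Hin. simpl. f_equal. eauto.
  - destruct (Nat.eqb_spec Y x) as [->|Hy], (Nat.eqb_spec X x) as [->|Hx]; try congruence;
      cbn [s_subst]; rewrite ?Nat.eqb_refl, ?(proj2 (Nat.eqb_neq _ _) Hx), ?(proj2 (Nat.eqb_neq _ _) Hy);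
      f_equal; auto.
  - destruct (Nat.eqb_spec Y x) as [->|Hy], (Nat.eqb_spec X x) as [->|Hx]; try congruence;
      cbn [s_subst]; rewrite ?Nat.eqb_refl, ?(proj2 (Nat.eqb_neq _ _) Hx), ?(proj2 (Nat.eqb_neq _ _) Hy);
      rewrite ?s_subst_fresh; auto.
Qed.

Lemma s_dual_subst x V : s_closed V -> forall U e, env_closed e ->
  (forall z, s_free z U -> z = x \/ In z (map fst e)) ->
  s_subst x (s_dual e V) (s_dual ((x, V) :: e) U) = s_dual e (s_subst x V U).
Proof.
  intros HV U. induction U using stype_nested_ind; intros e Ce Fr; cbn [s_dual s_subst env_subst].
  - reflexivity.
  - f_equal. auto.
  - f_equal. auto.
  - f_equal.
    + apply s_subst_fresh. intros (Hf & _)%env_subst_free; auto. exact (s_subst_not_free _ _ _ (HV x) Hf).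
    + apply IHU2; auto. intros z Hz. apply Fr. simpl. auto.
  - f_equal.
    + apply s_subst_fresh. intros (Hf & _)%env_subst_free; auto. exact (s_subst_not_free _ _ _ (HV x) Hf).
    + apply IHU2; auto. intros z Hz. apply Fr. simpl. auto.
  - f_equal. rewrite !map_map. apply map_ext_in. intros [l b] Hin. simpl. f_equal.
    apply (H l b Hin); auto. intros z Hz. apply Fr, s_free_bra. eauto.
  - f_equal. rewrite !map_map. apply map_ext_in. intros [l b] Hin. simpl. f_equal.
    apply (H l b Hin); auto. intros z Hz. apply Fr, s_free_sel. eauto.
  - destruct (Nat.eqb_spec x x0) as [<-|Hne]; cbn [s_dual].
    + f_equal. apply s_dual_ext. intros M. cbn [env_subst]. f_equal.
      apply s_subst_fresh, s_subst_not_free. intros (Hf & _)%env_subst_free; auto. simpl in Hf. tauto.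
    + f_equal.
      set (Z := env_subst e (SMu x0 (s_subst x V U))).
      assert (CZ : s_closed Z).
      { intros z (Hz & Hn)%env_subst_free; auto. destruct Hz as [Hz1 [[Hz2 Hz3]|Hz2]%s_free_subst].
        - destruct (Fr z) as [?|?]; [simpl; auto|congruence|auto].
        - exact (HV z Hz2). }
      rewrite (s_dual_ext U ((x0, Z) :: (x, V) :: e) ((x, V) :: (x0, Z) :: e)).
      2:{ intros M. cbn [env_subst]. f_equal. apply s_subst_comm; auto. }
      rewrite (s_dual_closed V e ((x0, Z) :: e)); auto using env_closed_cons.
      apply IHU; auto using env_closed_cons.
      intros z Hz. destruct (Nat.eq_dec z x0) as [->|Hz0]; [right; simpl; auto|].
      destruct (Fr z) as [?|?]; [simpl; auto|auto|right; simpl; auto].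
  - destruct (Nat.eqb_spec x x0); simpl; auto.
Qed.

Definition env_ST e := forall x V, In (x, V) e -> ST V.

Lemma env_ST_cons e x U : env_ST e -> (forall z, s_free z (SMu x U) -> In z (map fst e)) ->
  s_wf (SMu x U) -> s_guarded (SMu x U) -> env_ST ((x, env_subst e (SMu x U)) :: e).
Proof. intros He Fr Hw Hg y V [[= <- <-]|Hin]; [apply env_subst_ST|]; eauto. Qed.

Lemma free_mu_body e x U : (forall z, s_free z (SMu x U) -> In z (map fst e)) ->
  forall V z, s_free z U -> In z (map fst ((x, V) :: e)).
Proof. intros Fr V z Hz. simpl. destruct (Nat.eq_dec x z); auto. right. apply Fr. simpl. auto. Qed.

Lemma env_closed_cons_mu e x U : env_closed e ->
  (forall z, s_free z (SMu x U) -> In z (map fst e)) ->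
  env_closed ((x, env_subst e (SMu x U)) :: e).
Proof.
  intros Ce Fr. apply env_closed_cons; auto. intros z (Hz & Hn)%env_subst_free; auto.
Qed.

Lemma s_dual_free T : forall e, env_closed e -> (forall z, s_free z T -> In z (map fst e)) ->
  forall z, s_free z (s_dual e T) -> s_free z T.
Proof.
  induction T using stype_nested_ind; intros e Ce Fr z Hz; cbn [s_dual] in Hz;
    try (simpl in *; now eauto).
  - simpl in Hz |- *. destruct Hz as [(Hz & _)%env_subst_free|Hz]; auto.
    right. eapply IHT2; eauto. intros y Hy. apply Fr. simpl. auto.
  - simpl in Hz |- *. destruct Hz as [(Hz & _)%env_subst_free|Hz]; auto.
    right. eapply IHT2; eauto. intros y Hy. apply Fr. simpl. auto.
  - apply s_free_sel in Hz as (l & c & (b & Hin & ->)%in_map_snd & Hz). apply s_free_bra.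
    exists l, b. split; auto. eapply H; eauto. intros y Hy. apply Fr, s_free_bra. eauto.
  - apply s_free_bra in Hz as (l & c & (b & Hin & ->)%in_map_snd & Hz). apply s_free_sel.
    exists l, b. split; auto. eapply H; eauto. intros y Hy. apply Fr, s_free_sel. eauto.
  - simpl in Hz |- *. destruct Hz as [Hne Hz]. split; auto.
    apply (IHT ((x, env_subst e (SMu x T)) :: e)); auto using env_closed_cons_mu.
    exact (free_mu_body e x T Fr _).
Qed.

Lemma s_dual_unguarded y T e : s_unguarded y (s_dual e T) -> s_unguarded y T.
Proof. revert e. induction T; simpl; intros e H; eauto. destruct H. split; eauto. Qed.

Lemma s_dual_wf T : forall e, env_ST e -> (forall z, s_free z T -> In z (map fst e)) ->
  s_wf T -> s_guarded T -> s_wf (s_dual e T).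
Proof.
  induction T using stype_nested_ind; intros e He Fr Hw Hg; cbn [s_dual];
    try (simpl in *; now eauto).
  1,2: simpl in Hw, Hg |- *; split; [apply env_subst_ST; try tauto; intros z Hz; apply Fr; simpl; auto|].
  1,2: apply IHT2; auto; try tauto; intros z Hz; apply Fr; simpl; auto.
  - apply s_wf_sel. apply s_wf_bra in Hw as (Hne & Hnd & Hall). rewrite s_guarded_bra in Hg.
    rewrite map_fst_map_snd. split; [destruct ls; simpl; congruence|split; [exact Hnd|]].
    intros l c (b & Hin & ->)%in_map_snd. apply (H l b Hin); eauto.
    intros z Hz. apply Fr, s_free_bra. eauto.
  - apply s_wf_bra. apply s_wf_sel in Hw as (Hne & Hnd & Hall). rewrite s_guarded_sel in Hg.
    rewrite map_fst_map_snd. split; [destruct ls; simpl; congruence|split; [exact Hnd|]].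
    intros l c (b & Hin & ->)%in_map_snd. apply (H l b Hin); eauto.
    intros z Hz. apply Fr, s_free_sel. eauto.
  - simpl. apply IHT; [apply env_ST_cons; auto|exact (free_mu_body e x T Fr _)|exact Hw|apply Hg].
Qed.

Lemma s_dual_guarded T : forall e, env_ST e -> (forall z, s_free z T -> In z (map fst e)) ->
  s_wf T -> s_guarded T -> s_guarded (s_dual e T).
Proof.
  induction T using stype_nested_ind; intros e He Fr Hw Hg; cbn [s_dual];
    try (simpl in *; now eauto).
  1,2: simpl in Hw, Hg |- *; split; [apply env_subst_ST; try tauto; intros z Hz; apply Fr; simpl; auto|].
  1,2: apply IHT2; auto; try tauto; intros z Hz; apply Fr; simpl; auto.
  - apply s_guarded_sel. apply s_wf_bra in Hw as (_ & _ & Hall). rewrite s_guarded_bra in Hg.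
    intros l c (b & Hin & ->)%in_map_snd. apply (H l b Hin); eauto.
    intros z Hz. apply Fr, s_free_bra. eauto.
  - apply s_guarded_bra. apply s_wf_sel in Hw as (_ & _ & Hall). rewrite s_guarded_sel in Hg.
    intros l c (b & Hin & ->)%in_map_snd. apply (H l b Hin); eauto.
    intros z Hz. apply Fr, s_free_sel. eauto.
  - simpl in Hg |- *. split.
    + intros Hu%s_dual_unguarded. tauto.
    + apply IHT; [apply env_ST_cons; auto|exact (free_mu_body e x T Fr _)|exact Hw|apply Hg].
Qed.

Lemma ST_dual T : ST T -> ST (s_dual [] T).
Proof.
  intros (W & G & C).
  assert (He : env_ST []) by (intros x V []).
  assert (Fr : forall z, s_free z T -> In z (map fst (@nil (nat * stype))))
    by (intros z Hz; destruct (C z Hz)).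
  split; [|split]; auto using s_dual_wf, s_dual_guarded.
  intros y Hy. apply (C y). apply (s_dual_free T []); auto. intros x V [].
Qed.
End Dual.

Ltac inv_steps :=
  repeat match goal with
  | H : ctau COne _ |- _ => inversion H
  | H : ctau (CInB _ _) _ |- _ => inversion H
  | H : ctau (COutB _ _) _ |- _ => inversion H
  | H : ctau (CInC _ _) _ |- _ => inversion H
  | H : ctau (COutC _ _) _ |- _ => inversion H
  | H : ctau (CExt _) _ |- _ => inversion H
  | H : ctau (CVar _) _ |- _ => inversion H
  | H : cstep COne _ _ |- _ => inversion H
  | H : cstep (CMu _ _) _ _ |- _ => inversion H
  | H : cstep (CVar _) _ _ |- _ => inversion H
  | H : cstep (CInB _ _) _ _ |- _ => inversion H; subst; clear H
  | H : cstep (COutB _ _) _ _ |- _ => inversion H; subst; clear H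
  | H : cstep (CInC _ _) _ _ |- _ => inversion H; subst; clear H
  | H : cstep (COutC _ _) _ _ |- _ => inversion H; subst; clear H
  | H : cstep (CInt _) _ _ |- _ => apply cstep_int_inv in H as (? & ? & ->)
  | H : cstep (CExt _) _ _ |- _ => apply cstep_ext_inv in H as (? & ? & ->)
  end.

Section DualCompliance.
Context {BT L : Type}.
Notation stype := (@stype BT L).
Notation contract := (@contract BT L).
Implicit Types (ls : list (L * stype)) (T U V : stype) (cs : list (L * contract)).
Variable leb : BT -> BT -> Prop.
Variable B : contract -> contract -> Prop.
Hypothesis leb_refl : forall t, leb t t.
Hypothesis B_refl : forall s, SC s -> B s s.
Notation ptau := (ptau leb B).

Inductive s_mu_star : stype -> stype -> Prop :=
| s_mu_star_refl : forall T, s_mu_star T T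
| s_mu_star_step : forall x T U, s_mu_star (s_subst x (SMu x T) T) U -> s_mu_star (SMu x T) U.

Lemma s_mu_star_snoc T0 x T : s_mu_star T0 (SMu x T) -> s_mu_star T0 (s_subst x (SMu x T) T).
Proof. remember (SMu x T) as m. induction 1; subst; repeat constructor; auto. Qed.

Lemma s_mu_star_ST T0 T : s_mu_star T0 T -> ST T0 -> ST T.
Proof. induction 1; auto using ST_mu_unfold. Qed.

Lemma s_mu_star_det T0 Ta Tb :
  s_mu_star T0 Ta -> s_mu_star T0 Tb -> not_mu Ta -> not_mu Tb -> Ta = Tb.
Proof.
  intros H; revert Tb; induction H; intros Tb H2 Na Nb; inversion H2; subst; simpl in *;
    auto; contradiction.
Qed.

(* Two stages of the unfolding of one closed type: the two sides of [dual T || Mmap T] unfold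
   their binders independently. *)
Definition unfold_linked Ta Tb := exists T0, ST T0 /\ s_mu_star T0 Ta /\ s_mu_star T0 Tb.

Lemma unfold_linked_refl T : ST T -> unfold_linked T T.
Proof. intros H. exists T. split; [exact H|split; constructor]. Qed.

Lemma unfold_linked_ST Ta Tb : unfold_linked Ta Tb -> ST Ta /\ ST Tb.
Proof. intros (T0 & H0 & Ha & Hb). eauto using s_mu_star_ST. Qed.

Lemma unfold_linked_det Ta Tb : unfold_linked Ta Tb -> not_mu Ta -> not_mu Tb -> Ta = Tb.
Proof. intros (T0 & _ & Ha & Hb). eauto using s_mu_star_det. Qed.

Lemma unfold_linked_l x T Tb :
  unfold_linked (SMu x T) Tb -> unfold_linked (s_subst x (SMu x T) T) Tb.
Proof. intros (T0 & H0 & Ha & Hb). exists T0. auto using s_mu_star_snoc. Qed.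

Lemma unfold_linked_r Ta x T :
  unfold_linked Ta (SMu x T) -> unfold_linked Ta (s_subst x (SMu x T) T).
Proof. intros (T0 & H0 & Ha & Hb). exists T0. auto using s_mu_star_snoc. Qed.

Definition dual T : contract := Mmap (s_dual [] T).

Lemma dual_mu_step x T r : ST (SMu x T) -> ctau (dual (SMu x T)) r -> r = dual (s_subst x (SMu x T) T).
Proof.
  intros (_ & _ & C) Ht. unfold dual in Ht. cbn [s_dual Mmap env_subst] in Ht. inversion Ht; subst.
  change (CMu x (Mmap (s_dual [(x, SMu x T)] T))) with (Mmap (SMu x (s_dual [(x, SMu x T)] T))).
  rewrite <- Mmap_subst. unfold dual. f_equal.
  change (SMu x (s_dual [(x, SMu x T)] T)) with (s_dual [] (SMu x T)).
  apply (s_dual_subst x (SMu x T)).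
  - exact C.
  - intros y V [].
  - intros z Hz. destruct (Nat.eq_dec z x); auto. destruct (C z). simpl. auto.
Qed.

Lemma SC_dual T : ST T -> SC (dual T).
Proof. intros. now apply Mmap_SC, ST_dual. Qed.

Lemma Mmap_mu_step x T r : ctau (Mmap (SMu x T)) r -> r = Mmap (s_subst x (SMu x T) T).
Proof. intros Ht. inversion Ht; subst. now rewrite Mmap_subst. Qed.

Lemma dual_bra ls : dual (SBra ls) = CInt (map (fun p => (fst p, dual (snd p))) ls).
Proof. unfold dual. simpl. now rewrite map_map. Qed.
Lemma dual_sel ls : dual (SSel ls) = CExt (map (fun p => (fst p, dual (snd p))) ls).
Proof. unfold dual. simpl. now rewrite map_map. Qed.

(* The states of [dual T || Mmap T]: linked unfoldings, or a branch already chosen by one side. *)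
Inductive dual_rel : contract -> contract -> Prop :=
| dual_rel_linked Ta Tb : unfold_linked Ta Tb -> dual_rel (dual Ta) (Mmap Tb)
| dual_rel_bra ls l Ti Tb : unfold_linked (SBra ls) Tb -> In (l, Ti) ls ->
    dual_rel (CInt [(l, dual Ti)]) (Mmap Tb)
| dual_rel_sel ls l Ti Ta : unfold_linked Ta (SSel ls) -> In (l, Ti) ls ->
    dual_rel (dual Ta) (CInt [(l, Mmap Ti)]).

Lemma dual_rel_base T : ST T -> dual_rel (dual T) (Mmap T).
Proof. intros. now apply dual_rel_linked, unfold_linked_refl. Qed.

Definition dual_progress r s :=
  ((forall r' s', ~ ptau r s r' s') -> ticks r /\ ticks s) /\
  (forall r' s', ptau r s r' s' -> dual_rel r' s').

Lemma dual_progress_intro r s : (exists r' s', ptau r s r' s') ->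
  (forall r' s', ptau r s r' s' -> dual_rel r' s') -> dual_progress r s.
Proof. intros (r' & s' & Hp) Hall. split; auto. intros Hn. destruct (Hn r' s' Hp). Qed.

Lemma dual_progress_head_bra ls : ST (SBra ls) -> dual_progress (dual (SBra ls)) (Mmap (SBra ls)).
Proof.
  intros HT. pose proof (ST_bra _ HT) as (Hne & Hnd & Hall). rewrite dual_bra. apply dual_progress_intro.
  - destruct ls as [|[l Ti] [|q rest]]; [congruence| |].
    + do 2 eexists. eapply pt_sync; [apply cs_outL|apply cs_ext; now left|reflexivity].
    + do 2 eexists. apply pt_l. apply ct_int with (l := l) (s := dual Ti); simpl; auto; lia.
  - intros r' s' Hp. cbn [Mmap] in Hp.
    inversion Hp as [? ? ? H|? ? ? H|? ? ? ? ? ? H1 H2 Hc]; subst; [|inv_steps|].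
    + apply ctau_int_inv in H as (l & c & _ & (Ti & Hin & ->)%in_map_snd & ->).
      exact (dual_rel_bra ls l Ti (SBra ls) (unfold_linked_refl _ HT) Hin).
    + apply cstep_int_inv in H1 as (l & E & ->). apply cstep_ext_inv in H2 as (l' & Hin' & ->).
      simpl in Hc. subst l'.
      assert (Hin : In (l, r') (map (fun p => (fst p, dual (snd p))) ls)) by (rewrite E; now left).
      apply in_map_snd in Hin as (Ti & Hin & ->). apply in_map_snd in Hin' as (Ti' & Hin' & ->).
      rewrite (NoDup_fst_in_eq ls l Ti' Ti) by auto. apply dual_rel_base. eauto.
Qed.

Lemma dual_progress_head_sel ls : ST (SSel ls) -> dual_progress (dual (SSel ls)) (Mmap (SSel ls)).
Proof.
  intros HT. pose proof (ST_sel _ HT) as (Hne & Hnd & Hall). rewrite dual_sel. apply dual_progress_intro.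
  - destruct ls as [|[l Ti] [|q rest]]; [congruence| |].
    + do 2 eexists. eapply pt_sync; [apply cs_ext; now left|apply cs_outL|reflexivity].
    + do 2 eexists. apply pt_r. apply ct_int with (l := l) (s := Mmap Ti); simpl; auto; lia.
  - intros r' s' Hp. cbn [Mmap] in Hp.
    inversion Hp as [? ? ? H|? ? ? H|? ? ? ? ? ? H1 H2 Hc]; subst; [inv_steps| |].
    + apply ctau_int_inv in H as (l & c & _ & (Ti & Hin & ->)%in_map_snd & ->).
      rewrite <- dual_sel. exact (dual_rel_sel ls l Ti (SSel ls) (unfold_linked_refl _ HT) Hin).
    + apply cstep_int_inv in H2 as (l & E & ->). apply cstep_ext_inv in H1 as (l' & Hin' & ->).
      simpl in Hc. subst l'.
      assert (Hin : In (l, s') (map (fun p => (fst p, Mmap (snd p))) ls)) by (rewrite E; now left).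
      apply in_map_snd in Hin as (Ti & Hin & ->). apply in_map_snd in Hin' as (Ti' & Hin' & ->).
      rewrite (NoDup_fst_in_eq ls l Ti' Ti) by auto. apply dual_rel_base. eauto.
Qed.

Lemma dual_progress_head_bra_chosen ls l Ti : ST (SBra ls) -> In (l, Ti) ls ->
  dual_progress (CInt [(l, dual Ti)]) (Mmap (SBra ls)).
Proof.
  intros HT Hin. pose proof (ST_bra _ HT) as (Hne & Hnd & Hall). apply dual_progress_intro.
  - do 2 eexists. eapply pt_sync; [apply cs_outL|apply cs_ext, in_map_snd; eauto|reflexivity].
  - intros r' s' Hp. cbn [Mmap] in Hp.
    inversion Hp as [? ? ? H|? ? ? H|? ? ? ? ? ? H1 H2 Hc]; subst; [now apply ctau_single in H|inv_steps|].
    apply cstep_int_inv in H1 as (l0 & [= <- <-] & ->). apply cstep_ext_inv in H2 as (l' & Hin' & ->).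
    simpl in Hc. subst l'. apply in_map_snd in Hin' as (Ti' & Hin' & ->).
    rewrite (NoDup_fst_in_eq ls l Ti' Ti) by auto. apply dual_rel_base. eauto.
Qed.

Lemma dual_progress_head_sel_chosen ls l Ti : ST (SSel ls) -> In (l, Ti) ls ->
  dual_progress (dual (SSel ls)) (CInt [(l, Mmap Ti)]).
Proof.
  intros HT Hin. pose proof (ST_sel _ HT) as (Hne & Hnd & Hall).
  rewrite dual_sel. apply dual_progress_intro.
  - do 2 eexists. eapply pt_sync; [apply cs_ext, in_map_snd; eauto|apply cs_outL|reflexivity].
  - intros r' s' Hp.
    inversion Hp as [? ? ? H|? ? ? H|? ? ? ? ? ? H1 H2 Hc]; subst; [inv_steps|now apply ctau_single in H|].
    apply cstep_int_inv in H2 as (l0 & [= <- <-] & ->). apply cstep_ext_inv in H1 as (l' & Hin' & ->).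
    simpl in Hc. subst l'. apply in_map_snd in Hin' as (Ti' & Hin' & ->).
    rewrite (NoDup_fst_in_eq ls l Ti' Ti) by auto. apply dual_rel_base. eauto.
Qed.

Lemma dual_progress_head T : ST T -> not_mu T -> dual_progress (dual T) (Mmap T).
Proof.
  intros HT NM. destruct T as [|t U|t U|M U|M U|ls|ls|x U|x]; try contradiction;
    try (now apply dual_progress_head_bra); try (now apply dual_progress_head_sel);
    unfold dual; cbn [s_dual Mmap env_subst].
  - split; [now split|]. intros r' s' Hp. inversion Hp; subst; inv_steps.
  - apply dual_progress_intro.
    + do 2 eexists. eapply pt_sync; [constructor|constructor|apply leb_refl].
    + intros r' s' Hp. inversion Hp; subst; inv_steps. apply dual_rel_base. eapply ST_inB; eauto.
  - apply dual_progress_intro.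
    + do 2 eexists. eapply pt_sync; [constructor|constructor|apply leb_refl].
    + intros r' s' Hp. inversion Hp; subst; inv_steps. apply dual_rel_base. eapply ST_outB; eauto.
  - apply ST_inS in HT as [HM HU]. apply dual_progress_intro.
    + do 2 eexists. eapply pt_sync; [constructor|constructor|apply B_refl, Mmap_SC, HM].
    + intros r' s' Hp. inversion Hp; subst; inv_steps. now apply dual_rel_base.
  - apply ST_outS in HT as [HM HU]. apply dual_progress_intro.
    + do 2 eexists. eapply pt_sync; [constructor|constructor|apply B_refl, Mmap_SC, HM].
    + intros r' s' Hp. inversion Hp; subst; inv_steps. now apply dual_rel_base.
  - destruct HT as (_ & _ & C). destruct (C x). simpl. auto.
Qed.

Lemma ctau_Mmap_not_mu T s' : not_mu T -> ctau (Mmap T) s' ->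
  exists ls l Ti, T = SSel ls /\ In (l, Ti) ls /\ s' = CInt [(l, Mmap Ti)].
Proof.
  intros NM H. destruct T as [|t U|t U|M U|M U|ls|ls|x U|x]; simpl in H; try contradiction; inv_steps.
  apply ctau_int_inv in H as (l & c & _ & (Ti & Hin & ->)%in_map_snd & ->). eauto 6.
Qed.

Lemma ctau_dual_not_mu T r' : not_mu T -> ctau (dual T) r' ->
  exists ls l Ti, T = SBra ls /\ In (l, Ti) ls /\ r' = CInt [(l, dual Ti)].
Proof.
  intros NM H. destruct T as [|t U|t U|M U|M U|ls|ls|x U|x];
    try contradiction; try (unfold dual in H; simpl in H; inv_steps; fail).
  rewrite dual_bra in H.
  apply ctau_int_inv in H as (l & c & _ & (Ti & Hin & ->)%in_map_snd & ->). eauto 6.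
Qed.

Lemma dual_progress_linked Ta Tb : unfold_linked Ta Tb -> dual_progress (dual Ta) (Mmap Tb).
Proof.
  intros Hl. destruct (unfold_linked_ST _ _ Hl) as [STa STb].
  destruct (mu_or_not_mu Ta) as [(x & U & ->)|NMa].
  - apply dual_progress_intro; [do 2 eexists; apply pt_l; constructor|].
    intros r' s' Hp. inversion Hp as [? ? ? H|? ? ? H|? ? ? ? ? ? H]; subst.
    + apply dual_mu_step in H as ->; auto. now apply dual_rel_linked, unfold_linked_l.
    + destruct (mu_or_not_mu Tb) as [(y & V & ->)|NMb].
      * apply Mmap_mu_step in H as ->. now apply dual_rel_linked, unfold_linked_r.
      * apply ctau_Mmap_not_mu in H as (ls & l & Ti & -> & Hin & ->); auto. eapply dual_rel_sel; eauto.
    + inversion H.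
  - destruct (mu_or_not_mu Tb) as [(y & V & ->)|NMb].
    + apply dual_progress_intro; [do 2 eexists; apply pt_r; constructor|].
      intros r' s' Hp. inversion Hp as [? ? ? H|? ? ? H|? ? ? ? ? ? H1 H]; subst.
      * apply ctau_dual_not_mu in H as (ls & l & Ti & -> & Hin & ->); auto. eapply dual_rel_bra; eauto.
      * apply Mmap_mu_step in H as ->. now apply dual_rel_linked, unfold_linked_r.
      * inversion H.
    + rewrite <- (unfold_linked_det _ _ Hl NMa NMb). now apply dual_progress_head.
Qed.

Lemma dual_progress_bra_chosen ls l Ti Tb : unfold_linked (SBra ls) Tb -> In (l, Ti) ls ->
  dual_progress (CInt [(l, dual Ti)]) (Mmap Tb).
Proof.
  intros Hl Hin. destruct (unfold_linked_ST _ _ Hl) as [STa STb].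
  destruct (mu_or_not_mu Tb) as [(y & V & ->)|NMb].
  - apply dual_progress_intro; [do 2 eexists; apply pt_r; constructor|].
    intros r' s' Hp. inversion Hp as [? ? ? H|? ? ? H|? ? ? ? ? ? H1 H]; subst.
    + now apply ctau_single in H.
    + apply Mmap_mu_step in H as ->. eapply dual_rel_bra; eauto using unfold_linked_r.
    + inversion H.
  - rewrite <- (unfold_linked_det _ _ Hl I NMb). now apply dual_progress_head_bra_chosen.
Qed.

Lemma dual_progress_sel_chosen ls l Ti Ta : unfold_linked Ta (SSel ls) -> In (l, Ti) ls ->
  dual_progress (dual Ta) (CInt [(l, Mmap Ti)]).
Proof.
  intros Hl Hin. destruct (unfold_linked_ST _ _ Hl) as [STa STb].
  destruct (mu_or_not_mu Ta) as [(x & U & ->)|NMa].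
  - apply dual_progress_intro; [do 2 eexists; apply pt_l; constructor|].
    intros r' s' Hp. inversion Hp as [? ? ? H|? ? ? H|? ? ? ? ? ? H]; subst.
    + apply dual_mu_step in H as ->; auto. eapply dual_rel_sel; eauto using unfold_linked_l.
    + now apply ctau_single in H.
    + inversion H.
  - rewrite (unfold_linked_det _ _ Hl NMa I). now apply dual_progress_head_sel_chosen.
Qed.

Theorem comply_dual T : ST T -> comply leb B (dual T) (Mmap T).
Proof.
  intros HT. exists dual_rel. split; [|now apply dual_rel_base].
  intros r s [Ta Tb Hl|ls l Ti Tb Hl Hin|ls l Ti Ta Hl Hin].
  - now apply dual_progress_linked.
  - now apply (dual_progress_bra_chosen ls).
  - now apply (dual_progress_sel_chosen ls).
Qed.

End DualCompliance.

Section Bisimilarity.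
Context {BT L : Type}.
Notation contract := (@contract BT L).
Implicit Types (cs ds : list (L * contract)) (a b c s : contract).
Variable leb : BT -> BT -> Prop.

Definition labels_match (R : contract -> contract -> Prop) cs ds :=
  (forall l a, In (l, a) cs -> exists b, In (l, b) ds /\ R a b) /\
  (forall l b, In (l, b) ds -> exists a, In (l, a) cs /\ R a b).

Inductive head_match (R : contract -> contract -> Prop) : contract -> contract -> Prop :=
| hm_one : head_match R COne COne
| hm_inB t1 t2 a b : leb t1 t2 -> leb t2 t1 -> R a b -> head_match R (CInB t1 a) (CInB t2 b)
| hm_outB t1 t2 a b : leb t1 t2 -> leb t2 t1 -> R a b -> head_match R (COutB t1 a) (COutB t2 b)
| hm_inC c1 c2 a b : R c1 c2 -> R a b -> head_match R (CInC c1 a) (CInC c2 b)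
| hm_outC c1 c2 a b : R c1 c2 -> R a b -> head_match R (COutC c1 a) (COutC c2 b)
| hm_ext cs ds : labels_match R cs ds -> head_match R (CExt cs) (CExt ds)
| hm_int cs ds : labels_match R cs ds -> head_match R (CInt cs) (CInt ds).

Definition cbisim_sim (R : contract -> contract -> Prop) :=
  forall a b, R a b -> SC a /\ SC b /\
    exists ha hb, cunfolds a ha /\ cunfolds b hb /\ head_match R ha hb.

Definition cbisim a b := exists R, cbisim_sim R /\ R a b.

Lemma labels_match_mono (R R' : contract -> contract -> Prop) cs ds :
  (forall a b, R a b -> R' a b) -> labels_match R cs ds -> labels_match R' cs ds.
Proof.
  intros HR [H1 H2]. split.
  - intros l a Hin. destruct (H1 l a Hin) as (b & ? & ?). eauto.
  - intros l b Hin. destruct (H2 l b Hin) as (a & ? & ?). eauto.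
Qed.

Lemma head_match_mono (R R' : contract -> contract -> Prop) ha hb :
  (forall a b, R a b -> R' a b) -> head_match R ha hb -> head_match R' ha hb.
Proof. intros HR []; constructor; eauto using labels_match_mono. Qed.

Lemma cbisim_is_sim : cbisim_sim cbisim.
Proof.
  intros a b (R & HR & Hab). destruct (HR a b Hab) as (Sa & Sb & ha & hb & Ha & Hb & Hm).
  split; [exact Sa|split; [exact Sb|]]. exists ha, hb. split; [exact Ha|split; [exact Hb|]].
  apply (head_match_mono R); auto. intros x y Hxy. exists R. auto.
Qed.

Lemma cbisim_SC a b : cbisim a b -> SC a /\ SC b.
Proof. intros H. apply cbisim_is_sim in H. tauto. Qed.

Lemma head_match_sym (R : contract -> contract -> Prop) ha hb :
  head_match R ha hb -> head_match (fun x y => R y x) hb ha.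
Proof. intros [| | | | |cs ds [H1 H2]|cs ds [H1 H2]]; constructor; auto; split; auto. Qed.

Lemma cbisim_sym a b : cbisim a b -> cbisim b a.
Proof.
  intros (R & HR & Hab). exists (fun x y => R y x). split; auto.
  intros x y Hyx. destruct (HR y x Hyx) as (Sy & Sx & hy & hx & Hy & Hx & Hm).
  split; [exact Sx|split; [exact Sy|]]. exists hx, hy. split; [exact Hx|split; [exact Hy|]].
  now apply head_match_sym.
Qed.

Section Transitivity.
Hypothesis leb_trans : forall t1 t2 t3, leb t1 t2 -> leb t2 t3 -> leb t1 t3.

Lemma head_match_trans (R1 R2 : contract -> contract -> Prop) h1 h2 h3 :
  head_match R1 h1 h2 -> head_match R2 h2 h3 ->
  head_match (fun a c => exists b, R1 a b /\ R2 b c) h1 h3.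
Proof.
  intros H12 H23. destruct H12; inversion H23; subst; constructor; eauto.
  all: match goal with H : labels_match _ _ _, H' : labels_match _ _ _ |- _ =>
         destruct H as [A1 A2], H' as [B1 B2] end.
  all: split; [intros l x Hin; destruct (A1 l x Hin) as (y & Hy & ?); destruct (B1 l y Hy) as (z & ? & ?)
              |intros l z Hin; destruct (B2 l z Hin) as (y & Hy & ?); destruct (A2 l y Hy) as (x & ? & ?)];
       eauto.
Qed.

Lemma cbisim_trans a b c : cbisim a b -> cbisim b c -> cbisim a c.
Proof.
  intros Hab Hbc. exists (fun a c => exists b, cbisim a b /\ cbisim b c). split; [|eauto].
  clear a b c Hab Hbc. intros a c (b & Hab & Hbc).
  destruct (cbisim_is_sim a b Hab) as (Sa & _ & ha & hb & Ha & Hb & H1).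
  destruct (cbisim_is_sim b c Hbc) as (_ & Sc & hb' & hc & Hb' & Hc & H2).
  rewrite <- (cunfolds_det _ _ _ Hb Hb') in H2.
  split; [exact Sa|split; [exact Sc|]]. exists ha, hc. split; [exact Ha|split; [exact Hc|]].
  eapply head_match_trans; eauto.
Qed.

End Transitivity.

Lemma cbisim_single l a b : cbisim a b -> cbisim (CInt [(l, a)]) (CInt [(l, b)]).
Proof.
  intros Hab.
  exists (fun x y => cbisim x y \/ exists a b, cbisim a b /\ x = CInt [(l, a)] /\ y = CInt [(l, b)]).
  split; [|right; eauto]. clear a b Hab. intros x y [H|(a & b & Hab & -> & ->)].
  - destruct (cbisim_is_sim x y H) as (Sx & Sy & hx & hy & Hx & Hy & Hm).
    split; [exact Sx|split; [exact Sy|]]. exists hx, hy. split; [exact Hx|split; [exact Hy|]].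
    eapply head_match_mono; [|exact Hm]. auto.
  - destruct (cbisim_SC a b Hab) as [Sa Sb].
    split; [now apply SC_single|split; [now apply SC_single|]].
    exists (CInt [(l, a)]), (CInt [(l, b)]). split; [now constructor|split; [now constructor|]].
    constructor. split.
    + intros l' a' [[= <- <-]|[]]. exists b. split; [now left|auto].
    + intros l' b' [[= <- <-]|[]]. exists a. split; [now left|auto].
Qed.

End Bisimilarity.

Section TypeBisimilarity.
Context {BT L : Type}.
Notation stype := (@stype BT L).
Notation contract := (@contract BT L).
Implicit Types (ls : list (L * stype)) (T U : stype).
Variable leb : BT -> BT -> Prop.
Notation mapM ls := (map (fun p => (fst p, Mmap (snd p))) ls).

Lemma subtype_is_sim : @sub_sim BT L leb (subtype leb).
Proof.
  intros T S (R & HR & HTS). destruct (HR T S HTS) as (S1 & S2 & C1 & C2 & C3 & C4 & C5 & C6 & C7).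
  assert (Sub : forall A B, R A B -> subtype leb A B) by (intros A B H; exists R; auto).
  split; [auto|split; [auto|split; [auto|]]].
  split; [|split; [|split; [|split; [|split]]]].
  - intros t1 a' H. destruct (C2 t1 a' H) as (t2 & b' & ? & ? & ?). exists t2, b'. auto.
  - intros t1 a' H. destruct (C3 t1 a' H) as (t2 & b' & ? & ? & ?). exists t2, b'. auto.
  - intros ac a' H. destruct (C4 ac a' H) as (bc & b' & ? & ? & ?). exists bc, b'. auto.
  - intros ac a' H. destruct (C5 ac a' H) as (bc & b' & ? & ? & ?). exists bc, b'. auto.
  - intros cs H. destruct (C6 cs H) as (cs' & ? & Hl). exists cs'. split; auto.
    intros l a' Hin. destruct (Hl l a' Hin) as (b' & ? & ?). exists b'. auto.
  - intros cs H. destruct (C7 cs H) as (cs' & ? & Hl). exists cs'. split; auto.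
    intros l a' Hin. destruct (Hl l a' Hin) as (b' & ? & ?). exists b'. auto.
Qed.

Definition sbt_image a b : Prop :=
  exists T1 T2, ST T1 /\ ST T2 /\ sbt_eq leb T1 T2 /\ a = Mmap T1 /\ b = Mmap T2.

Lemma sbt_image_intro U1 U2 : ST U1 -> ST U2 -> subtype leb U1 U2 -> subtype leb U2 U1 ->
  sbt_image (Mmap U1) (Mmap U2).
Proof. intros. exists U1, U2. split; [|split; [|split; [split|split]]]; auto. Qed.

Lemma sbt_eq_labels_match ls1 ls2 (P : stype -> stype -> Prop) (Q : stype -> stype -> Prop) :
  NoDup (map fst ls1) -> NoDup (map fst ls2) ->
  (forall l T, In (l, T) ls1 -> ST T) -> (forall l T, In (l, T) ls2 -> ST T) ->
  (forall Ti Si, P Ti Si -> Q Si Ti -> subtype leb Ti Si /\ subtype leb Si Ti) ->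
  (forall l Ti, In (l, Ti) ls1 -> exists Si, In (l, Si) ls2 /\ P Ti Si) ->
  (forall l Si, In (l, Si) ls2 -> exists Ti, In (l, Ti) ls1 /\ Q Si Ti) ->
  labels_match sbt_image (mapM ls1) (mapM ls2).
Proof.
  intros Hnd1 Hnd2 Hall1 Hall2 HPQ H12 H21. split.
  - intros l a (Ti & Hin & ->)%in_map_snd.
    destruct (in_pairing ls1 ls2 P Q Hnd1 H12 H21 l Ti Hin) as (Si & HinS & Hp & Hq).
    exists (Mmap Si). split; [apply in_map_snd; eauto|].
    destruct (HPQ Ti Si Hp Hq). apply sbt_image_intro; eauto.
  - intros l b (Si & Hin & ->)%in_map_snd.
    destruct (in_pairing ls2 ls1 Q P Hnd2 H21 H12 l Si Hin) as (Ti & HinT & Hq & Hp).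
    exists (Mmap Ti). split; [apply in_map_snd; eauto|].
    destruct (HPQ Ti Si Hp Hq). apply sbt_image_intro; eauto.
Qed.

Lemma sbt_eq_head T1 T2 U1 : ST T1 -> ST T2 -> sbt_eq leb T1 T2 -> unfolds T1 U1 ->
  exists U2, unfolds T2 U2 /\ head_match leb sbt_image (Mmap U1) (Mmap U2).
Proof.
  intros S1 S2 [F R] HU. pose proof (unfolds_ST _ _ HU S1) as SU.
  destruct (subtype_is_sim _ _ F) as (_ & _ & D1 & D2 & D3 & D4 & D5 & D6 & D7).
  destruct (subtype_is_sim _ _ R) as (_ & _ & E1 & E2 & E3 & E4 & E5 & E6 & E7).
  destruct U1 as [|t U|t U|M U|M U|ls|ls|x U|x].
  - exists SEnd. split; [auto|constructor].
  - destruct (D2 _ _ HU) as (t2 & U2 & H2 & Hs & Hl). destruct (E2 _ _ H2) as (t1 & U1 & H1 & Hs' & Hl').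
    pose proof (unfolds_det _ _ _ HU H1) as [= <- <-]. pose proof (unfolds_ST _ _ H2 S2) as SU2.
    exists (SInB t2 U2). split; [auto|constructor; auto]. apply sbt_image_intro; eauto using ST_inB.
  - destruct (D3 _ _ HU) as (t2 & U2 & H2 & Hs & Hl). destruct (E3 _ _ H2) as (t1 & U1 & H1 & Hs' & Hl').
    pose proof (unfolds_det _ _ _ HU H1) as [= <- <-]. pose proof (unfolds_ST _ _ H2 S2) as SU2.
    exists (SOutB t2 U2). split; [auto|constructor; auto]. apply sbt_image_intro; eauto using ST_outB.
  - destruct (D5 _ _ HU) as (M2 & U2 & H2 & Hs & Hm). destruct (E5 _ _ H2) as (M1 & U1 & H1 & Hs' & Hm').
    pose proof (unfolds_det _ _ _ HU H1) as [= <- <-]. pose proof (unfolds_ST _ _ H2 S2) as SU2.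
    apply ST_inS in SU as [], SU2 as [].
    exists (SInS M2 U2). split; [auto|constructor; apply sbt_image_intro; auto].
  - destruct (D4 _ _ HU) as (M2 & U2 & H2 & Hs & Hm). destruct (E4 _ _ H2) as (M1 & U1 & H1 & Hs' & Hm').
    pose proof (unfolds_det _ _ _ HU H1) as [= <- <-]. pose proof (unfolds_ST _ _ H2 S2) as SU2.
    apply ST_outS in SU as [], SU2 as [].
    exists (SOutS M2 U2). split; [auto|constructor; apply sbt_image_intro; auto].
  - destruct (D6 _ HU) as (ls2 & H2 & Hl). destruct (E6 _ H2) as (ls1 & H1 & Hl').
    pose proof (unfolds_det _ _ _ HU H1) as [= <-].
    apply ST_bra in SU as (_ & ? & ?). pose proof (ST_bra _ (unfolds_ST _ _ H2 S2)) as (_ & ? & ?).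
    exists (SBra ls2). split; [auto|constructor]. eapply sbt_eq_labels_match; eauto.
  - destruct (D7 _ HU) as (ls2 & H2 & Hl). destruct (E7 _ H2) as (ls1 & H1 & Hl').
    pose proof (unfolds_det _ _ _ HU H1) as [= <-].
    apply ST_sel in SU as (_ & ? & ?). pose proof (ST_sel _ (unfolds_ST _ _ H2 S2)) as (_ & ? & ?).
    exists (SSel ls2). split; [auto|constructor].
    apply (sbt_eq_labels_match ls ls2 (fun Ti Si => subtype leb Si Ti) (fun Si Ti => subtype leb Ti Si));
      auto.
  - destruct (unfolds_not_mu _ _ HU).
  - destruct SU as (_ & _ & C). destruct (C x). simpl. auto.
Qed.

Lemma sbt_image_is_sim : cbisim_sim leb sbt_image.
Proof.
  intros a b (T1 & T2 & S1 & S2 & Heq & -> & ->).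
  destruct (unfolds_exists T1 S1) as (U1 & HU1).
  destruct (sbt_eq_head T1 T2 U1 S1 S2 Heq HU1) as (U2 & HU2 & Hm).
  split; [now apply Mmap_SC|split; [now apply Mmap_SC|]].
  exists (Mmap U1), (Mmap U2). auto using Mmap_unfolds.
Qed.

Lemma sbt_eq_cbisim T1 T2 : ST T1 -> ST T2 -> sbt_eq leb T1 T2 -> cbisim leb (Mmap T1) (Mmap T2).
Proof. intros. exists sbt_image. split; [apply sbt_image_is_sim|]. exists T1, T2. auto. Qed.

End TypeBisimilarity.

Section BisimilarClients.
Context {BT L : Type}.
Notation contract := (@contract BT L).
Implicit Types (cs ds : list (L * contract)) (a b r s h : contract).
Variable leb : BT -> BT -> Prop.
Variable B : contract -> contract -> Prop.
Hypothesis leb_trans : forall t1 t2 t3, leb t1 t2 -> leb t2 t3 -> leb t1 t3.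
Hypothesis B_trans : forall a b c, B a b -> B b c -> B a c.
Hypothesis cbisim_B : forall a b, cbisim leb a b -> B a b.
Notation cbisim := (cbisim leb).
Notation comply := (comply leb B).
Notation ptau := (ptau leb B).

Definition act_match (k1 k2 : @act BT L) : Prop :=
  match k1, k2 with
  | AInB t1, AInB t2 | AOutB t1, AOutB t2 => leb t1 t2 /\ leb t2 t1
  | AInC c1, AInC c2 | AOutC c1, AOutC c2 => cbisim c1 c2
  | AInL l1, AInL l2 | AOutL l1, AOutL l2 => l1 = l2
  | _, _ => False
  end.

Lemma act_match_sym k1 k2 : act_match k1 k2 -> act_match k2 k1.
Proof. destruct k1, k2; simpl; intuition auto using cbisim_sym. Qed.

Lemma compat_act_match k0 k1 k2 : act_match k1 k2 -> compat leb B k0 k2 -> compat leb B k0 k1.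
Proof.
  destruct k1, k2; simpl; try contradiction; destruct k0; simpl; intuition (subst; eauto using cbisim_sym).
Qed.

Lemma head_match_cstep r ha s k2 s' : comply r ha -> head_match leb cbisim ha s -> cstep s k2 s' ->
  exists h k1 s1, comply r h /\ cstep h k1 s1 /\ act_match k1 k2 /\ cbisim s1 s'.
Proof.
  intros Hc Hm Hs. destruct Hm as [| | | | |cs ds [_ H21]|cs ds [_ H21]].
  1-5: inv_steps; try solve [do 3 eexists; split; [exact Hc|split; [constructor|simpl; auto]]].
  - apply cstep_ext_inv in Hs as (l & Hin & ->). destruct (H21 _ _ Hin) as (a & Hina & Hab).
    exists (CExt cs), (AInL l), a. split; [exact Hc|split; [now constructor|simpl; auto]].
  - apply cstep_int_inv in Hs as (l & -> & ->). destruct (H21 l s' (or_introl eq_refl)) as (a & Hin & Hab).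
    exists (CInt [(l, a)]), (AOutL l), a.
    split; [eapply comply_choice; eauto|split; [constructor|simpl; auto]].
Qed.

Lemma head_match_ctau r ha s s' : comply r ha -> head_match leb cbisim ha s -> ctau s s' ->
  exists s1, comply r s1 /\ cbisim s1 s'.
Proof.
  intros Hc Hm Hs. destruct Hm as [| | | | | |cs ds [_ H21]]; inv_steps.
  apply ctau_int_inv in Hs as (l & b & _ & Hin & ->). destruct (H21 l b Hin) as (a & Hina & Hab).
  exists (CInt [(l, a)]). split; [eapply comply_choice; eauto|now apply cbisim_single].
Qed.

Definition enables r h s := forall r' h', ptau r h r' h' -> exists r'' s', ptau r s r'' s'.

Lemma enables_of_steps r h s : (forall h', ~ ctau h h') ->
  (forall k1 h', cstep h k1 h' -> exists k2 s', cstep s k2 s' /\ act_match k1 k2) -> enables r h s.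
Proof.
  intros Nt Hs r' h' Hp. inversion Hp as [? ? ? H|? ? ? H|? ? ? ? k0 k1 H1 H2 Hc]; subst.
  - exists r', s. now apply pt_l.
  - destruct (Nt _ H).
  - destruct (Hs _ _ H2) as (k2 & s' & Hs' & Hm).
    exists r', s'. eapply pt_sync; eauto. eapply compat_act_match; eauto using act_match_sym.
Qed.

Lemma comply_stuck_enabled r h s : comply r h -> enables r h s ->
  (forall r' s', ~ ptau r s r' s') -> ticks r /\ ticks h.
Proof.
  intros Hc He Hn. apply (comply_stuck _ _ _ _ Hc). intros r' h' Hp.
  destruct (He _ _ Hp) as (r'' & s' & Hp'). exact (Hn _ _ Hp').
Qed.

Lemma head_match_stuck r ha s : comply r ha -> head_match leb cbisim ha s ->
  (forall r' s', ~ ptau r s r' s') -> ticks r /\ ticks s.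
Proof.
  intros Hc Hm Hn.
  assert (Hh : exists h, comply r h /\ enables r h s /\ (ticks h -> ticks s)).
  { destruct Hm as [| | | | |cs ds [H12 _]|cs ds [H12 H21]].
    1-6: eexists; split; [exact Hc|split; [|intros Ht; unfold ticks in *; now inversion Ht]].
    1-5: apply enables_of_steps; [intros h' Ht; inversion Ht|intros k1 h' Hst; inversion Hst; subst];
         try solve [do 2 eexists; split; [constructor|simpl; auto]].
    - apply enables_of_steps; [intros h' Ht; inversion Ht|].
      intros k1 h' (l & Hin & ->)%cstep_ext_inv. destruct (H12 _ _ Hin) as (b & Hinb & _).
      exists (AInL l), b. split; [now constructor|reflexivity].
    - destruct ds as [|[l b] [|q rest]].
      + exists (CInt cs). split; [exact Hc|split; [|discriminate]].
        destruct cs as [|[l a] ?]; [|destruct (H12 l a (or_introl eq_refl)) as (? & [] & _)].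
        apply enables_of_steps; [intros h' (? & ? & Hl & _)%ctau_int_inv; simpl in Hl; lia|].
        intros k1 h' (? & E & _)%cstep_int_inv. discriminate.
      + destruct (H21 l b (or_introl eq_refl)) as (a & Hin & _).
        exists (CInt [(l, a)]). split; [eapply comply_choice; eauto|split; [|discriminate]].
        apply enables_of_steps; [apply ctau_single|].
        intros k1 h' (l' & [= <- <-] & ->)%cstep_int_inv. do 2 eexists. split; [constructor|simpl; auto].
      + destruct (Hn r (CInt [(l, b)])). apply pt_r, ct_int; simpl; auto; lia. }
  destruct Hh as (h & Hc' & He & Ht). destruct (comply_stuck_enabled _ _ _ Hc' He Hn). auto.
Qed.

Definition bisim_client r s := exists s1 s0, comply r s1 /\ cbisim s1 s0 /\ mu_star s0 s.

Lemma bisim_client_sim : comply_sim leb B bisim_client.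
Proof.
  intros r s (s1 & s0 & Hc & Hb & Hm).
  assert (Left : forall r', ctau r r' -> bisim_client r' s).
  { intros r' Ht. exists s1, s0. split; [|auto]. eapply comply_ptau; eauto. now apply pt_l. }
  destruct (c_mu_or_not_mu s) as [(x & u & ->)|NM].
  - split.
    + intros Hn. destruct (Hn r (c_subst x (CMu x u) u)). apply pt_r. constructor.
    + intros r' s' Hp. inversion Hp as [? ? ? H|? ? ? H|? ? ? ? ? ? H1 H2 Hcp]; subst; auto.
      * inversion H; subst. exists s1, s0. split; auto. split; auto. now apply mu_star_snoc.
      * inversion H2.
  - destruct (cbisim_is_sim _ _ _ Hb) as (_ & _ & ha & hb & Ha & Hb' & Hhm).
    rewrite (cunfolds_det _ _ _ Hb' (mu_star_cunfolds _ _ _ Hm (cunfolds_other _ NM))) in Hhm.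
    pose proof (comply_cunfolds _ _ _ _ _ Hc Ha) as Hca. split.
    + now apply (head_match_stuck _ ha).
    + intros r' s' Hp. inversion Hp as [? ? ? H|? ? ? H|? ? ? ? ? k2 H1 H2 Hcp]; subst; auto.
      * destruct (head_match_ctau _ _ _ _ Hca Hhm H) as (s1' & ? & ?).
        exists s1', s'. split; [auto|split; [auto|constructor]].
      * destruct (head_match_cstep _ _ _ _ _ Hca Hhm H2) as (h & k1 & s1' & Hch & Hs1 & Ham & Hbs).
        exists s1', s'. split; [|split; [auto|constructor]].
        eapply comply_ptau; [exact Hch|]. eapply pt_sync; eauto. eapply compat_act_match; eauto.
Qed.

Lemma comply_cbisim a b r : cbisim a b -> comply r a -> comply r b.
Proof.
  intros Hab Hc. exists bisim_client. split; [apply bisim_client_sim|].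
  exists a, b. split; [auto|split; [auto|constructor]].
Qed.

End BisimilarClients.

Section Forward.
Context {BT L : Type}.
Notation stype := (@stype BT L).
Notation contract := (@contract BT L).
Implicit Types (a b c : contract).
Variable leb : BT -> BT -> Prop.
Hypothesis leb_trans : forall t1 t2 t3, leb t1 t2 -> leb t2 t3 -> leb t1 t3.

(* Reflexivity is added rather than proved for [cbisim], which would need the termination of
   unfolding on [SC]. *)
Definition bisim_pre a b : Prop := cbisim leb a b \/ (a = b /\ SC a).

Lemma bisim_pre_trans a b c : bisim_pre a b -> bisim_pre b c -> bisim_pre a c.
Proof.
  intros [H1|[-> S1]] [H2|[-> S2]]; [left; eapply cbisim_trans; eauto|left|left|right]; auto.
Qed.

Lemma bisim_pre_preorder : preorder_on_SC bisim_pre.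
Proof.
  split; [|split].
  - intros x y [H|[-> S]]; [exact (cbisim_SC _ _ _ H)|auto].
  - intros x Sx. now right.
  - exact bisim_pre_trans.
Qed.

Lemma bisim_pre_post_fixed a b : bisim_pre a b -> sqsubB leb bisim_pre a b.
Proof.
  intros [H|[-> S]].
  - destruct (cbisim_SC _ _ _ H). split; [auto|split; [auto|]].
    intros r _ Hc. eapply comply_cbisim; eauto using bisim_pre_trans. now left.
  - split; [auto|split; auto].
Qed.

Theorem sbt_eq_sqsub (S T : stype) : ST S -> ST T -> sbt_eq leb S T -> sqsub leb (Mmap S) (Mmap T).
Proof.
  intros HS HT Heq. exists bisim_pre.
  split; [exact bisim_pre_preorder|split; [exact bisim_pre_post_fixed|]].
  left. now apply sbt_eq_cbisim.
Qed.

End Forward.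

Section Tests.
Context {BT L : Type}.
Notation stype := (@stype BT L).
Notation contract := (@contract BT L).
Implicit Types (ls : list (L * stype)) (T U V : stype) (cs ds : list (L * contract)) (s r c : contract).
Variable leb : BT -> BT -> Prop.
Variable B : contract -> contract -> Prop.
Notation comply := (comply leb B).

Lemma comply_sel_choice r ls : ST (SSel ls) -> comply r (Mmap (SSel ls)) ->
  exists l Vi, In (l, Vi) ls /\ comply r (CInt [(l, Mmap Vi)]).
Proof.
  intros HS Hc. destruct (ST_sel _ HS) as (Hne & _ & _). destruct ls as [|[l Vi] rest]; [congruence|].
  exists l, Vi. split; [now left|]. eapply comply_choice; [exact Hc|now left].
Qed.

Lemma not_mu_cases V : ST V -> not_mu V ->
  V = SEnd \/ (exists t V1, V = SInB t V1) \/ (exists t V1, V = SOutB t V1) \/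
  (exists M V1, V = SInS M V1) \/ (exists M V1, V = SOutS M V1) \/
  (exists ls, V = SBra ls) \/ (exists ls, V = SSel ls).
Proof.
  intros HS NM. destruct V; eauto 10; [contradiction|].
  destruct HS as (_ & _ & C). destruct (C n). simpl. auto.
Qed.

Lemma comply_must_sync r s : comply r s -> (forall r', ~ ctau r r') -> (forall s', ~ ctau s s') ->
  ~ (ticks r /\ ticks s) ->
  exists k1 k2 r' s', cstep r k1 r' /\ cstep s k2 s' /\ compat leb B k1 k2 /\ comply r' s'.
Proof.
  intros Hc H1 H2 H3. apply NNPP. intros Hn. apply H3, (comply_stuck _ _ _ _ Hc).
  intros r' s' Hp. inversion Hp as [? ? ? H|? ? ? H|? ? ? ? k1 k2 Hr Hs Hk]; subst;
    [eapply H1|eapply H2|apply Hn]; eauto 10 using comply_ptau.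
Qed.

Ltac no_ctau := let x := fresh in let H := fresh in intros x H; inversion H; subst; try (simpl in *; lia).

Ltac must_sync Hc :=
  destruct (comply_must_sync _ _ Hc) as (? & ? & ? & ? & ? & ? & ? & ?);
  [no_ctau|no_ctau|unfold ticks; intros [? ?]; discriminate|inv_steps].

(* Every shape of [V] that does not answer the test deadlocks. *)
Ltac shape_cases HS NM Hc :=
  destruct (not_mu_cases _ HS NM)
    as [->|[(t2 & V1 & ->)|[(t2 & V1 & ->)|[(Vc & V1 & ->)|[(Vc & V1 & ->)|[(ls' & ->)|(ls' & ->)]]]]]];
  [..|try solve [exfalso; destruct (comply_sel_choice _ _ HS Hc) as (? & ? & _ & Hc2);
                 must_sync Hc2; simpl in *; contradiction]];
  simpl in Hc; try solve [exfalso; must_sync Hc; simpl in *; contradiction].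

Lemma comply_one_Mmap V : ST V -> not_mu V -> comply COne (Mmap V) -> V = SEnd.
Proof. intros HS NM Hc. shape_cases HS NM Hc. reflexivity. Qed.

Lemma comply_outB_Mmap t r V : ST V -> not_mu V -> comply (COutB t r) (Mmap V) ->
  exists t2 V1, V = SInB t2 V1 /\ leb t t2 /\ comply r (Mmap V1).
Proof. intros HS NM Hc. shape_cases HS NM Hc. must_sync Hc. eauto. Qed.

Lemma comply_inB_Mmap t r V : ST V -> not_mu V -> comply (CInB t r) (Mmap V) ->
  exists t2 V1, V = SOutB t2 V1 /\ leb t2 t /\ comply r (Mmap V1).
Proof. intros HS NM Hc. shape_cases HS NM Hc. must_sync Hc. eauto. Qed.

Lemma comply_outC_Mmap c r V : ST V -> not_mu V -> comply (COutC c r) (Mmap V) ->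
  exists Vc V1, V = SInS Vc V1 /\ B c (Mmap Vc) /\ comply r (Mmap V1).
Proof. intros HS NM Hc. shape_cases HS NM Hc. must_sync Hc. eauto. Qed.

Lemma comply_inC_Mmap c r V : ST V -> not_mu V -> comply (CInC c r) (Mmap V) ->
  exists Vc V1, V = SOutS Vc V1 /\ B (Mmap Vc) c /\ comply r (Mmap V1).
Proof. intros HS NM Hc. shape_cases HS NM Hc. must_sync Hc. eauto. Qed.

Lemma comply_single_Mmap l r V : ST V -> not_mu V -> comply (CInt [(l, r)]) (Mmap V) ->
  exists ls Vi, V = SBra ls /\ In (l, Vi) ls /\ comply r (Mmap Vi).
Proof.
  intros HS NM Hc. shape_cases HS NM Hc. must_sync Hc.
  match goal with H : [_] = [_] |- _ => injection H as <- <- end. simpl in *. subst.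
  match goal with H : In _ (map _ _) |- _ => apply in_map_snd in H as (Vi & Hin & ->) end.
  eauto.
Qed.

Lemma comply_ext_Mmap cs V : ST V -> not_mu V -> comply (CExt cs) (Mmap V) ->
  exists ls, V = SSel ls /\ forall l Vi, In (l, Vi) ls -> exists c, In (l, c) cs /\ comply c (Mmap Vi).
Proof.
  intros HS NM Hc. shape_cases HS NM Hc. exists ls'. split; [reflexivity|].
  intros l Vi Hin. assert (Hc2 : comply (CExt cs) (CInt [(l, Mmap Vi)])).
  { eapply comply_choice; [exact Hc|apply in_map_snd; eauto]. }
  must_sync Hc2. match goal with H : [_] = [_] |- _ => injection H as <- <- end. simpl in *. subst. eauto.
Qed.

Lemma comply_outB_inB t1 t2 r u : leb t1 t2 -> comply r u -> comply (COutB t1 r) (CInB t2 u).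
Proof.
  intros Hl Hc. apply comply_intro; [do 2 eexists; eapply pt_sync; [constructor|constructor|exact Hl]|].
  intros r' s' Hp. inversion Hp; subst; inv_steps. exact Hc.
Qed.

Lemma comply_inB_outB t1 t2 r u : leb t2 t1 -> comply r u -> comply (CInB t1 r) (COutB t2 u).
Proof.
  intros Hl Hc. apply comply_intro; [do 2 eexists; eapply pt_sync; [constructor|constructor|exact Hl]|].
  intros r' s' Hp. inversion Hp; subst; inv_steps. exact Hc.
Qed.

Lemma comply_outC_inC c1 c2 r u : B c1 c2 -> comply r u -> comply (COutC c1 r) (CInC c2 u).
Proof.
  intros Hl Hc. apply comply_intro; [do 2 eexists; eapply pt_sync; [constructor|constructor|exact Hl]|].
  intros r' s' Hp. inversion Hp; subst; inv_steps. exact Hc.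
Qed.

Lemma comply_inC_outC c1 c2 r u : B c2 c1 -> comply r u -> comply (CInC c1 r) (COutC c2 u).
Proof.
  intros Hl Hc. apply comply_intro; [do 2 eexists; eapply pt_sync; [constructor|constructor|exact Hl]|].
  intros r' s' Hp. inversion Hp; subst; inv_steps. exact Hc.
Qed.

Lemma comply_single_ext l r ds : (exists s, In (l, s) ds) -> (forall s, In (l, s) ds -> comply r s) ->
  comply (CInt [(l, r)]) (CExt ds).
Proof.
  intros (s0 & Hin0) Hall. apply comply_intro.
  { do 2 eexists. eapply pt_sync; [apply cs_outL|apply cs_ext; eauto|reflexivity]. }
  intros r' s' Hp. inversion Hp as [? ? ? H|? ? ? H|? ? ? ? ? ? H1 H2 Hk]; subst; inv_steps.
  - now apply ctau_single in H.
  - match goal with H : [_] = [_] |- _ => injection H as <- <- end. simpl in Hk. subst. auto.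
Qed.

Lemma comply_ext_single l cs s : (exists c, In (l, c) cs) -> (forall c, In (l, c) cs -> comply c s) ->
  comply (CExt cs) (CInt [(l, s)]).
Proof.
  intros (c0 & Hin0) Hall. apply comply_intro.
  { do 2 eexists. eapply pt_sync; [apply cs_ext; eauto|apply cs_outL|reflexivity]. }
  intros r' s' Hp. inversion Hp as [? ? ? H|? ? ? H|? ? ? ? ? ? H1 H2 Hk]; subst; inv_steps.
  - now apply ctau_single in H.
  - match goal with H : [_] = [_] |- _ => injection H as <- <- end. simpl in Hk. subst. auto.
Qed.

Lemma comply_ext_int cs ds : ds <> [] -> (forall l s, In (l, s) ds -> exists c, In (l, c) cs) ->
  (forall l s c, In (l, s) ds -> In (l, c) cs -> comply c s) -> comply (CExt cs) (CInt ds).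
Proof.
  intros Hne Hex Hall. destruct ds as [|[l s] [|q rest]]; [congruence| |].
  - apply comply_ext_single; eauto using in_eq.
  - apply comply_intro.
    + do 2 eexists. apply pt_r. apply ct_int with (l := l) (s := s); simpl; auto. lia.
    + intros r' s' Hp. inversion Hp as [? ? ? H|? ? ? H|? ? ? ? ? ? H1 H2 Hk]; subst; inv_steps;
        [|discriminate].
      apply ctau_int_inv in H as (l1 & s1 & _ & Hin & ->). apply comply_ext_single; eauto.
Qed.
End Tests.

Section Refinement.
Context {BT L : Type}.
Notation stype := (@stype BT L).
Notation contract := (@contract BT L).
Implicit Types (ls : list (L * stype)) (U V : stype) (cs : list (L * contract)) (r c : contract).
Variable leb : BT -> BT -> Prop.
Variable B : contract -> contract -> Prop.
Hypothesis leb_refl : forall t, leb t t.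
Hypothesis B_refl : forall s, SC s -> B s s.
Hypothesis B_post : forall x y, B x y -> sqsubB leb B x y.
Hypothesis L_eq_dec : forall l1 l2 : L, {l1 = l2} + {l1 <> l2}.
Variables T S : stype.
Hypothesis HT : ST T.
Hypothesis HS : ST S.
Hypothesis Hsq : sqsubB leb B (Mmap T) (Mmap S).
Notation comply := (comply leb B).
Notation sq := (sqsubB leb B).

Lemma dual_is_client U : ST U -> comply (dual U) (Mmap U).
Proof. exact (comply_dual leb B leb_refl B_refl U). Qed.

Lemma sq_test U S' r : unfolds T U -> unfolds S S' -> SC r -> comply r (Mmap U) -> comply r (Mmap S').
Proof.
  intros HU HS' Sr Hc. destruct Hsq as (_ & _ & Htr).
  eapply comply_cunfolds; [|exact (Mmap_unfolds _ _ HS')]. apply Htr; [exact Sr|].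
  eapply comply_mu_star_inv; [apply cunfolds_mu_star, Mmap_unfolds, HU|exact Hc].
Qed.

Lemma sq_end : unfolds T SEnd -> unfolds S SEnd.
Proof.
  intros HU. destruct (unfolds_exists S HS) as [S' HS'].
  pose proof (sq_test _ _ _ HU HS' SC_one (comply_one_one _ _)) as Hc.
  now rewrite <- (comply_one_Mmap _ _ S' (unfolds_ST _ _ HS' HS) (unfolds_not_mu _ _ HS') Hc).
Qed.

Lemma sq_inB t1 T1 : unfolds T (SInB t1 T1) ->
  exists t2 S1, unfolds S (SInB t2 S1) /\ leb t1 t2 /\ sq (Mmap T1) (Mmap S1).
Proof.
  intros HU. destruct (unfolds_exists S HS) as [S' HS'].
  pose proof (ST_inB _ _ (unfolds_ST _ _ HU HT)) as ST1.
  assert (Test : forall r, SC r -> comply r (Mmap T1) ->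
    exists t2 S1, S' = SInB t2 S1 /\ leb t1 t2 /\ comply r (Mmap S1)).
  { intros r Sr Hr. apply comply_outB_Mmap; eauto using unfolds_ST, unfolds_not_mu.
    apply (sq_test _ _ _ HU HS'); [now apply SC_outB|]. now apply comply_outB_inB. }
  destruct (Test _ (SC_dual _ ST1) (dual_is_client _ ST1)) as (t2 & S1 & -> & Hl & _).
  exists t2, S1. split; [auto|split; [auto|]].
  pose proof (ST_inB _ _ (unfolds_ST _ _ HS' HS)) as SS1.
  split; [now apply Mmap_SC|split; [now apply Mmap_SC|]].
  intros r Sr Hr. destruct (Test r Sr Hr) as (? & ? & [= <- <-] & _ & Hc). exact Hc.
Qed.

Lemma sq_outB t1 T1 : unfolds T (SOutB t1 T1) ->
  exists t2 S1, unfolds S (SOutB t2 S1) /\ leb t2 t1 /\ sq (Mmap T1) (Mmap S1).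
Proof.
  intros HU. destruct (unfolds_exists S HS) as [S' HS'].
  pose proof (ST_outB _ _ (unfolds_ST _ _ HU HT)) as ST1.
  assert (Test : forall r, SC r -> comply r (Mmap T1) ->
    exists t2 S1, S' = SOutB t2 S1 /\ leb t2 t1 /\ comply r (Mmap S1)).
  { intros r Sr Hr. apply comply_inB_Mmap; eauto using unfolds_ST, unfolds_not_mu.
    apply (sq_test _ _ _ HU HS'); [now apply SC_inB|]. now apply comply_inB_outB. }
  destruct (Test _ (SC_dual _ ST1) (dual_is_client _ ST1)) as (t2 & S1 & -> & Hl & _).
  exists t2, S1. split; [auto|split; [auto|]].
  pose proof (ST_outB _ _ (unfolds_ST _ _ HS' HS)) as SS1.
  split; [now apply Mmap_SC|split; [now apply Mmap_SC|]].
  intros r Sr Hr. destruct (Test r Sr Hr) as (? & ? & [= <- <-] & _ & Hc). exact Hc.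
Qed.

Lemma sq_inS Tc T1 : unfolds T (SInS Tc T1) ->
  exists Sc S1, unfolds S (SInS Sc S1) /\ sq (Mmap Tc) (Mmap Sc) /\ sq (Mmap T1) (Mmap S1).
Proof.
  intros HU. destruct (unfolds_exists S HS) as [S' HS'].
  pose proof (ST_inS _ _ (unfolds_ST _ _ HU HT)) as [STc ST1].
  assert (Test : forall r, SC r -> comply r (Mmap T1) ->
    exists Sc S1, S' = SInS Sc S1 /\ B (Mmap Tc) (Mmap Sc) /\ comply r (Mmap S1)).
  { intros r Sr Hr. apply comply_outC_Mmap; eauto using unfolds_ST, unfolds_not_mu.
    apply (sq_test _ _ _ HU HS'); [apply SC_outC; auto using Mmap_SC|].
    apply comply_outC_inC; auto using Mmap_SC. }
  destruct (Test _ (SC_dual _ ST1) (dual_is_client _ ST1)) as (Sc & S1 & -> & Hb & _).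
  exists Sc, S1. split; [auto|split; [auto|]].
  pose proof (ST_inS _ _ (unfolds_ST _ _ HS' HS)) as [SSc SS1].
  split; [now apply Mmap_SC|split; [now apply Mmap_SC|]].
  intros r Sr Hr. destruct (Test r Sr Hr) as (? & ? & [= <- <-] & _ & Hc). exact Hc.
Qed.

Lemma sq_outS Tc T1 : unfolds T (SOutS Tc T1) ->
  exists Sc S1, unfolds S (SOutS Sc S1) /\ sq (Mmap Sc) (Mmap Tc) /\ sq (Mmap T1) (Mmap S1).
Proof.
  intros HU. destruct (unfolds_exists S HS) as [S' HS'].
  pose proof (ST_outS _ _ (unfolds_ST _ _ HU HT)) as [STc ST1].
  assert (Test : forall r, SC r -> comply r (Mmap T1) ->
    exists Sc S1, S' = SOutS Sc S1 /\ B (Mmap Sc) (Mmap Tc) /\ comply r (Mmap S1)).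
  { intros r Sr Hr. apply comply_inC_Mmap; eauto using unfolds_ST, unfolds_not_mu.
    apply (sq_test _ _ _ HU HS'); [apply SC_inC; auto using Mmap_SC|].
    apply comply_inC_outC; auto using Mmap_SC. }
  destruct (Test _ (SC_dual _ ST1) (dual_is_client _ ST1)) as (Sc & S1 & -> & Hb & _).
  exists Sc, S1. split; [auto|split; [auto|]].
  pose proof (ST_outS _ _ (unfolds_ST _ _ HS' HS)) as [SSc SS1].
  split; [now apply Mmap_SC|split; [now apply Mmap_SC|]].
  intros r Sr Hr. destruct (Test r Sr Hr) as (? & ? & [= <- <-] & _ & Hc). exact Hc.
Qed.

Lemma sq_bra ls : unfolds T (SBra ls) ->
  exists ls', unfolds S (SBra ls') /\
    forall l Ti, In (l, Ti) ls -> exists Si, In (l, Si) ls' /\ sq (Mmap Ti) (Mmap Si).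
Proof.
  intros HU. destruct (unfolds_exists S HS) as [S' HS'].
  destruct (ST_bra _ (unfolds_ST _ _ HU HT)) as (Hne & Hnd & Hall).
  assert (Test : forall l Ti r, In (l, Ti) ls -> SC r -> comply r (Mmap Ti) ->
    exists ls' Si, S' = SBra ls' /\ In (l, Si) ls' /\ comply r (Mmap Si)).
  { intros l Ti r Hin Sr Hr. apply comply_single_Mmap; eauto using unfolds_ST, unfolds_not_mu.
    apply (sq_test _ _ _ HU HS'); [now apply SC_single|]. apply comply_single_ext.
    - exists (Mmap Ti). apply in_map_snd. eauto.
    - intros s (Ti' & Hin' & ->)%in_map_snd. now rewrite (NoDup_fst_in_eq ls l Ti' Ti). }
  destruct ls as [|[l0 T0] rest]; [congruence|].
  destruct (Test l0 T0 _ (in_eq _ _) (SC_dual _ (Hall _ _ (in_eq _ _)))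
    (dual_is_client _ (Hall _ _ (in_eq _ _)))) as (ls' & _ & -> & _ & _).
  exists ls'. split; [auto|]. destruct (ST_bra _ (unfolds_ST _ _ HS' HS)) as (_ & Hnd' & Hall').
  intros l Ti Hin.
  destruct (Test l Ti _ Hin (SC_dual _ (Hall _ _ Hin)) (dual_is_client _ (Hall _ _ Hin)))
    as (? & Si & [= <-] & HinS & _).
  exists Si. split; [auto|]. split; [apply Mmap_SC; eauto|split; [apply Mmap_SC; eauto|]].
  intros r Sr Hr. destruct (Test l Ti r Hin Sr Hr) as (? & Si' & [= <-] & HinS' & Hc).
  now rewrite (NoDup_fst_in_eq ls' l Si Si').
Qed.

(* A client of a selection that continues as [r] after label [l]; the duals on the other
   labels make it compliant whichever branch the selection takes. *)
Definition patch_test ls l r : contract :=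
  CExt (map (fun p => (fst p, if L_eq_dec (fst p) l then r else dual (snd p))) ls).

Lemma in_patch_test ls l r l' c :
  In (l', c) (map (fun p => (fst p, if L_eq_dec (fst p) l then r else dual (snd p))) ls) ->
  exists Tj, In (l', Tj) ls /\ c = if L_eq_dec l' l then r else dual Tj.
Proof. intros ([l2 Tj] & [= <- <-] & Hin)%in_map_iff. eauto. Qed.

Lemma SC_patch_test ls l r : ST (SSel ls) -> SC r -> SC (patch_test ls l r).
Proof.
  intros (Hne & Hnd & Hall)%ST_sel Sr. apply SC_ext.
  - destruct ls; simpl; congruence.
  - rewrite map_map. exact Hnd.
  - intros l' c (Tj & Hin & ->)%in_patch_test. destruct (L_eq_dec l' l); eauto using SC_dual.
Qed.

Lemma comply_patch_test ls l Ti r : ST (SSel ls) -> In (l, Ti) ls -> comply r (Mmap Ti) ->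
  comply (patch_test ls l r) (Mmap (SSel ls)).
Proof.
  intros HSl Hin Hr. destruct (ST_sel _ HSl) as (Hne & Hnd & Hall). apply comply_ext_int.
  - destruct ls; simpl; congruence.
  - intros l' s (Tj & HinT & ->)%in_map_snd.
    exists (if L_eq_dec l' l then r else dual Tj). apply in_map_iff. now exists (l', Tj).
  - intros l' s c (Tj & HinT & ->)%in_map_snd (Tj' & HinT' & ->)%in_patch_test.
    rewrite (NoDup_fst_in_eq ls l' Tj' Tj) by auto.
    destruct (L_eq_dec l' l) as [->|]; [now rewrite (NoDup_fst_in_eq ls l Tj Ti)|].
    apply comply_dual; eauto.
Qed.

Lemma sq_sel ls : unfolds T (SSel ls) ->
  exists ls', unfolds S (SSel ls') /\ (forall l Si, In (l, Si) ls' -> exists Ti, In (l, Ti) ls) /\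
    forall l Ti Si, In (l, Ti) ls -> In (l, Si) ls' -> sq (Mmap Ti) (Mmap Si).
Proof.
  intros HU. destruct (unfolds_exists S HS) as [S' HS'].
  pose proof (unfolds_ST _ _ HU HT) as STl. pose proof (unfolds_ST _ _ HS' HS) as STS'.
  pose proof (sq_test _ _ _ HU HS' (SC_dual _ STl) (dual_is_client _ STl)) as H0.
  rewrite dual_sel in H0.
  destruct (comply_ext_Mmap _ _ _ _ STS' (unfolds_not_mu _ _ HS') H0) as (ls' & -> & Hl0).
  exists ls'. split; [auto|split].
  - intros l Si Hin. destruct (Hl0 l Si Hin) as (c & (Ti & ? & _)%in_map_snd & _). eauto.
  - intros l Ti Si HinT HinS. destruct (ST_sel _ STl) as (_ & _ & Hall).
    destruct (ST_sel _ STS') as (_ & _ & Hall').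
    split; [apply Mmap_SC; eauto|split; [apply Mmap_SC; eauto|]]. intros r Sr Hr.
    pose proof (sq_test _ _ _ HU HS' (SC_patch_test _ l _ STl Sr)
                  (comply_patch_test _ _ _ _ STl HinT Hr)) as H1.
    destruct (comply_ext_Mmap _ _ _ _ STS' I H1) as (ls2 & [= <-] & Hl2).
    destruct (Hl2 l Si HinS) as (c & (Tj & _ & ->)%in_patch_test & Hc).
    destruct (L_eq_dec l l); [exact Hc|congruence].
Qed.

Lemma sq_clauses :
  (unfolds T SEnd -> unfolds S SEnd) /\
  (forall t1 T1, unfolds T (SInB t1 T1) ->
     exists t2 S1, unfolds S (SInB t2 S1) /\ leb t1 t2 /\ sq (Mmap T1) (Mmap S1)) /\
  (forall t1 T1, unfolds T (SOutB t1 T1) ->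
     exists t2 S1, unfolds S (SOutB t2 S1) /\ leb t2 t1 /\ sq (Mmap T1) (Mmap S1)) /\
  (forall Tc T1, unfolds T (SInS Tc T1) ->
     exists Sc S1, unfolds S (SInS Sc S1) /\ sq (Mmap Tc) (Mmap Sc) /\ sq (Mmap T1) (Mmap S1)) /\
  (forall Tc T1, unfolds T (SOutS Tc T1) ->
     exists Sc S1, unfolds S (SOutS Sc S1) /\ sq (Mmap Sc) (Mmap Tc) /\ sq (Mmap T1) (Mmap S1)) /\
  (forall ls, unfolds T (SBra ls) -> exists ls', unfolds S (SBra ls') /\
     forall l Ti, In (l, Ti) ls -> exists Si, In (l, Si) ls' /\ sq (Mmap Ti) (Mmap Si)) /\
  (forall ls, unfolds T (SSel ls) -> exists ls', unfolds S (SSel ls') /\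
     (forall l Si, In (l, Si) ls' -> exists Ti, In (l, Ti) ls) /\
     forall l Ti Si, In (l, Ti) ls -> In (l, Si) ls' -> sq (Mmap Ti) (Mmap Si)).
Proof.
  split; [exact sq_end|split; [exact sq_inB|split; [exact sq_outB|split; [exact sq_inS|]]]].
  split; [exact sq_outS|split; [exact sq_bra|exact sq_sel]].
Qed.
End Refinement.

Section Backward.
Context {BT L : Type}.
Notation stype := (@stype BT L).
Notation contract := (@contract BT L).
Implicit Types (T S U V : stype).
Variable leb : BT -> BT -> Prop.
Hypothesis leb_refl : forall t, leb t t.
Hypothesis L_eq_dec : forall l1 l2 : L, {l1 = l2} + {l1 <> l2}.

Definition post_fixed_pre (B : contract -> contract -> Prop) :=
  preorder_on_SC B /\ forall x y, B x y -> sqsubB leb B x y.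

Definition sq_under T S := exists B, post_fixed_pre B /\ sqsubB leb B (Mmap T) (Mmap S).

Definition mutual_sq T S := ST T /\ ST S /\ sq_under T S /\ sq_under S T.

Lemma mutual_sq_intro B1 B2 U V : post_fixed_pre B1 -> post_fixed_pre B2 -> ST U -> ST V ->
  sqsubB leb B1 (Mmap U) (Mmap V) -> sqsubB leb B2 (Mmap V) (Mmap U) -> mutual_sq U V.
Proof. intros. split; [auto|split; [auto|split; [exists B1|exists B2]; auto]]. Qed.

Lemma mutual_sq_sim : sub_sim leb mutual_sq.
Proof.
  intros T S (HT & HS & (B1 & G1 & H1) & (B2 & G2 & H2)).
  pose proof G1 as [[_ [R1 _]] Q1]. pose proof G2 as [[_ [R2 _]] Q2].
  destruct (sq_clauses leb B1 leb_refl R1 Q1 L_eq_dec T S HT HS H1) as (D1 & D2 & D3 & D4 & D5 & D6 & D7).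
  destruct (sq_clauses leb B2 leb_refl R2 Q2 L_eq_dec S T HS HT H2) as (E1 & E2 & E3 & E4 & E5 & E6 & E7).
  split; [auto|split; [auto|split; [auto|]]].
  split; [|split; [|split; [|split; [|split]]]].
  - intros t1 T1 HU. destruct (D2 _ _ HU) as (t2 & S1 & HS1 & Hl & Hq1).
    destruct (E2 _ _ HS1) as (? & ? & HT1 & _ & Hq2). pose proof (unfolds_det _ _ _ HU HT1) as [= <- <-].
    exists t2, S1. split; [auto|split; [|auto]].
    apply (mutual_sq_intro B1 B2); eauto using ST_inB, unfolds_ST.
  - intros t1 T1 HU. destruct (D3 _ _ HU) as (t2 & S1 & HS1 & Hl & Hq1).
    destruct (E3 _ _ HS1) as (? & ? & HT1 & _ & Hq2). pose proof (unfolds_det _ _ _ HU HT1) as [= <- <-].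
    exists t2, S1. split; [auto|split; [|auto]].
    apply (mutual_sq_intro B1 B2); eauto using ST_outB, unfolds_ST.
  - intros Tc T1 HU. destruct (D5 _ _ HU) as (Sc & S1 & HS1 & Hc1 & Hq1).
    destruct (E5 _ _ HS1) as (? & ? & HT1 & Hc2 & Hq2). pose proof (unfolds_det _ _ _ HU HT1) as [= <- <-].
    pose proof (ST_outS _ _ (unfolds_ST _ _ HU HT)) as [].
    pose proof (ST_outS _ _ (unfolds_ST _ _ HS1 HS)) as [].
    exists Sc, S1. split; [auto|split; apply (mutual_sq_intro B1 B2); auto].
  - intros Tc T1 HU. destruct (D4 _ _ HU) as (Sc & S1 & HS1 & Hc1 & Hq1).
    destruct (E4 _ _ HS1) as (? & ? & HT1 & Hc2 & Hq2). pose proof (unfolds_det _ _ _ HU HT1) as [= <- <-].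
    pose proof (ST_inS _ _ (unfolds_ST _ _ HU HT)) as [].
    pose proof (ST_inS _ _ (unfolds_ST _ _ HS1 HS)) as [].
    exists Sc, S1. split; [auto|split; apply (mutual_sq_intro B1 B2); auto].
  - intros ls HU. destruct (D6 _ HU) as (ls' & HS1 & Hl1). destruct (E6 _ HS1) as (? & HT1 & Hl2).
    pose proof (unfolds_det _ _ _ HU HT1) as [= <-].
    destruct (ST_bra _ (unfolds_ST _ _ HU HT)) as (_ & Hnd & Hc).
    destruct (ST_bra _ (unfolds_ST _ _ HS1 HS)) as (_ & _ & Hc').
    exists ls'. split; [auto|]. intros l Ti Hin.
    destruct (in_pairing _ _ _ _ Hnd Hl1 Hl2 l Ti Hin) as (Si & HinS & Hq1 & Hq2).
    exists Si. split; [auto|]. apply (mutual_sq_intro B1 B2); eauto.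
  - intros ls HU. destruct (D7 _ HU) as (ls' & HS1 & Hlab & Hq1).
    destruct (E7 _ HS1) as (? & HT1 & _ & Hq2).
    pose proof (unfolds_det _ _ _ HU HT1) as [= <-].
    destruct (ST_sel _ (unfolds_ST _ _ HU HT)) as (_ & _ & Hc).
    destruct (ST_sel _ (unfolds_ST _ _ HS1 HS)) as (_ & _ & Hc').
    exists ls'. split; [auto|]. intros l Si HinS. destruct (Hlab l Si HinS) as (Ti & HinT).
    exists Ti. split; [auto|]. apply (mutual_sq_intro B1 B2); eauto.
Qed.

Theorem mutual_sqsub_sbt_eq S T : ST S -> ST T ->
  sqsub leb (Mmap S) (Mmap T) -> sqsub leb (Mmap T) (Mmap S) -> sbt_eq leb S T.
Proof.
  intros HS HT (B1 & P1 & Q1 & H1) (B2 & P2 & Q2 & H2).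
  assert (Hm : mutual_sq S T).
  { apply (mutual_sq_intro B1 B2); [split|split| | | |]; auto. }
  split; exists mutual_sq; split; auto using mutual_sq_sim.
  destruct Hm as (? & ? & ? & ?). split; auto.
Qed.

End Backward.

Lemma injective_eq_dec {A : Type} (f : A -> nat) :
  (forall a b, f a = f b -> a = b) -> forall a b : A, {a = b} + {a <> b}.
Proof.
  intros Hf a b. destruct (Nat.eq_dec (f a) (f b)) as [E|N]; [left; auto|right; congruence].
Qed.

Theorem mainTheorem2
  (BT L : Type) (leb : BT -> BT -> Prop)
  (leb_refl : forall t, leb t t)
  (leb_trans : forall t1 t2 t3, leb t1 t2 -> leb t2 t3 -> leb t1 t3)
  (L_countable : exists f : L -> nat, forall l1 l2, f l1 = f l2 -> l1 = l2)
  (S T : @stype BT L) (HS : ST S) (HT : ST T) :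
  sbt_eq leb S T <->
  (sqsub leb (Mmap S) (Mmap T) /\ sqsub leb (Mmap T) (Mmap S)).
Proof.
  destruct L_countable as (f & Hf). split.
  - intros [H1 H2]. split; apply sbt_eq_sqsub; auto; split; auto.
  - intros [H1 H2]. exact (mutual_sqsub_sbt_eq leb leb_refl (injective_eq_dec f Hf) S T HS HT H1 H2).
Qed.
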